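(* Let $\mathcal{O}(\mathbb{D})$ be the vector space of all analytic functions on the open unit disk $\mathbb{D}$. For $f\in\mathcal{O}(\mathbb{D})$ define $$(Cf)(z)=\frac{1}{z}\int_0^z\frac{f(\xi)}{1-\xi}\,d\xi,\quad z\in\mathbb{D},$$ where the integral is along any path from $0$ to $z$ in $\mathbb{D}$ (with the value at $z=0$ understood by continuity, so that $Cf\in\mathcal{O}(\mathbb{D})$). Then the map $f\mapsto Cf$ is a linear isomorphism of $\mathcal{O}(\mathbb{D})$ onto itself. *)

From Stdlib Require Import Reals.
From Coquelicot Require Import Coquelicot.
Open Scope C_scope.

Definition in_disk (z : C) : Prop := (Cmod z < 1)%R.

Definition analytic_on_disk (f : C -> C) : Prop :=
  forall z : C, in_disk z -> @ex_derive C_AbsRing C_NormedModule f z.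

(* Complex line integral of g along the straight segment from a to b:
   int_[a,b] g(xi) dxi = (b - a) * int_0^1 g(a + t (b - a)) dt. *)
Definition seg_integral (g : C -> C) (a b : C) : C :=
  (b - a) * RInt (V := C_R_CompleteNormedModule)
                 (fun t : R => g (a + RtoC t * (b - a))) 0%R 1%R.

(* The Cesaro operator: (Cf)(z) = (1/z) int_0^z f(xi)/(1-xi) dxi for z <> 0,
   and (Cf)(0) = f(0), the value by continuity. *)
Definition cesaro (f : C -> C) (z : C) : C :=
  if Ceq_dec z 0 then f 0
  else / z * seg_integral (fun xi => f xi / (1 - xi)) 0 z.

(* With [h = f / (1 - z)] and [u(z) = int_[0,z] h], we have [Cf(z) = u(z) / z].  By Goursat's
   theorem for triangles, [u] is a primitive of [h] on the disk, so [Cf] is holomorphic off 0, and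
   at 0 it equals [int_0^1 h(tz) dt], whose derivative is [h'(0)/2].  Linearity is linearity of the
   integral, and [(z Cf(z))' = h(z)] shows that [Cf] determines [f].  Conversely [C] maps
   [(1 - z) (z g)'] to [g]; this function is holomorphic because the derivative of a holomorphic
   function is holomorphic, which follows from Cauchy's integral formula on circles (proved by
   contracting the circle to its centre) differentiated under the integral sign. *)

From Stdlib Require Import Reals Lra Lia Psatz.
From Stdlib Require Import FunctionalExtensionality ClassicalDescription IndefiniteDescription.
From Coquelicot Require Import Coquelicot.
Open Scope C_scope.
Open Scope R_scope.

Global Arguments Cmod _%_C_scope.
Global Arguments Re _%_C_scope.
Global Arguments Im _%_C_scope.

(** * Complex numbers *)

Lemma norm_R_Rabs (r : R) : norm r = Rabs r.
Proof. reflexivity. Qed.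

Lemma norm_C_R_Cmod (x : C) : @norm R_AbsRing C_R_NormedModule x = Cmod x.
Proof.
  destruct x as [a b]. unfold norm; simpl. unfold prod_norm, Cmod; simpl.
  f_equal. rewrite !norm_R_Rabs. rewrite !Rmult_1_r, <- !Rabs_mult.
  rewrite !(Rabs_pos_eq (_ * _)) by nra. reflexivity.
Qed.

Lemma Cmod_le_Rabs_Re_Im (x : C) : Cmod x <= Rabs (Re x) + Rabs (Im x).
Proof.
  destruct x as [a b]. unfold Cmod; simpl.
  pose proof (Rabs_pos a); pose proof (Rabs_pos b).
  rewrite <- (sqrt_Rsqr (Rabs a + Rabs b)) by lra.
  apply sqrt_le_1_alt. unfold Rsqr.
  assert (a * (a * 1) = Rabs a * Rabs a) by (rewrite <- Rabs_mult; rewrite Rabs_pos_eq; nra).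
  assert (b * (b * 1) = Rabs b * Rabs b) by (rewrite <- Rabs_mult; rewrite Rabs_pos_eq; nra).
  nra.
Qed.

Lemma im_le_Cmod (x : C) : Rabs (Im x) <= Cmod x.
Proof.
  destruct x as [a b]. unfold Cmod; simpl.
  rewrite <- sqrt_Rsqr_abs. apply sqrt_le_1_alt. unfold Rsqr. nra.
Qed.

Lemma Cmod_RtoC_mult (r : R) (z : C) : Cmod (RtoC r * z) = Rabs r * Cmod z.
Proof. rewrite Cmod_mult, Cmod_R. reflexivity. Qed.

Lemma Cmod_sub_sym (a b : C) : Cmod (a - b) = Cmod (b - a).
Proof. replace (a - b)%C with (- (b - a))%C by ring. apply Cmod_opp. Qed.

Lemma Cmod_triangle3 (a b c : C) : Cmod (a + b + c) <= Cmod a + Cmod b + Cmod c.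
Proof. eapply Rle_trans; [apply Cmod_triangle|]. pose proof (Cmod_triangle a b). lra. Qed.

Lemma Cmod_minus_le (a b : C) : Cmod (a - b) <= Cmod a + Cmod b.
Proof. unfold Cminus. eapply Rle_trans; [apply Cmod_triangle|]. rewrite Cmod_opp. lra. Qed.

Lemma Cmod_triangle_rev (a b : C) : Cmod a - Cmod b <= Cmod (a - b).
Proof. pose proof (Cmod_triangle (a - b) b). replace (a - b + b)%C with a in H by ring. lra. Qed.

Lemma Cmod_lt_of_sub_lt (w w' : C) r : Cmod (w' - w) < r - Cmod w -> Cmod w' < r.
Proof. intros H. replace w' with ((w' - w) + w)%C by ring. pose proof (Cmod_triangle (w' - w) w). lra. Qed.

Lemma Rabs_Cmod_sub_le (x y : C) : Rabs (Cmod x - Cmod y) <= Cmod (x - y).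
Proof.
  apply Rabs_le. split.
  - pose proof (Cmod_triangle_rev y x). rewrite Cmod_sub_sym in H. lra.
  - apply Cmod_triangle_rev.
Qed.

Lemma Cmod_inv_le (x : C) m : 0 < m -> m <= Cmod x -> Cmod (/ x)%C <= / m.
Proof.
  intros Hm Hx. assert (Hx0 : x <> RtoC 0) by (intro E; rewrite E, Cmod_0 in Hx; lra).
  rewrite Cmod_inv by auto. apply Rinv_le_contravar; auto.
Qed.

Lemma C_neq0_of_Cmod_ge (x : C) m : 0 < m -> m <= Cmod x -> x <> RtoC 0.
Proof. intros Hm Hx E. rewrite E, Cmod_0 in Hx. lra. Qed.

Lemma C_ext (x y : C) : Re x = Re y -> Im x = Im y -> x = y.
Proof. destruct x, y; simpl; intros; subst; auto. Qed.

Lemma Re_minus (x y : C) : Re (x - y)%C = Re x - Re y.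
Proof. destruct x, y; simpl; ring. Qed.

Lemma Im_minus (x y : C) : Im (x - y)%C = Im x - Im y.
Proof. destruct x, y; simpl; ring. Qed.

Lemma RtoC_m1 : RtoC (-1) = (- RtoC 1)%C.
Proof. apply C_ext; simpl; ring. Qed.

Lemma RtoC_half : RtoC (1/2) = (/ RtoC 2)%C.
Proof. apply C_ext; simpl; field. Qed.

Lemma half_scal (X : C) : (RtoC 2 * (RtoC (1/2) * X))%C = X.
Proof. destruct X; apply C_ext; simpl; field. Qed.

Lemma Cmod_half (y : C) : Cmod (RtoC (1/2) * y)%C = Cmod y / 2.
Proof. rewrite Cmod_RtoC_mult, Rabs_pos_eq by lra. field. Qed.

Lemma RtoC_2_neq0 : RtoC 2 <> RtoC 0.
Proof. intro H. apply RtoC_inj in H. lra. Qed.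

Lemma Ci_mul_Ci : (Ci * Ci)%C = (- RtoC 1)%C.
Proof. unfold Ci. apply C_ext; simpl; ring. Qed.

Lemma Ci_neq0 : Ci <> RtoC 0.
Proof. unfold Ci. intro E. injection E. lra. Qed.

Lemma Re_opp_Ci_mul (z : C) : Re (- Ci * z)%C = Im z.
Proof. destruct z; unfold Ci; simpl; ring. Qed.

Lemma Cmult_close (x0 y0 : C) e : 0 < e -> exists d, 0 < d /\ forall x y, Cmod (x - x0) < d ->
  Cmod (y - y0) < d -> Cmod (x * y - x0 * y0)%C < e.
Proof.
  intros He. set (A := Cmod x0 + 1). set (B := Cmod y0 + 1).
  assert (HA : 0 < A) by (unfold A; pose proof (Cmod_ge_0 x0); lra).
  assert (HB : 0 < B) by (unfold B; pose proof (Cmod_ge_0 y0); lra).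
  exists (Rmin 1 (e / (2 * (A + B)))). split. { apply Rmin_pos; [lra|apply Rdiv_lt_0_compat; lra]. }
  intros x y Hx Hy.
  assert (Hx1 : Cmod (x - x0) < e / (2 * (A + B))) by (eapply Rlt_le_trans; [apply Hx|apply Rmin_r]).
  assert (Hy1 : Cmod (y - y0) < e / (2 * (A + B))) by (eapply Rlt_le_trans; [apply Hy|apply Rmin_r]).
  assert (Hy2 : Cmod (y - y0) < 1) by (eapply Rlt_le_trans; [apply Hy|apply Rmin_l]).
  replace (x * y - x0 * y0)%C with ((x - x0) * y + x0 * (y - y0))%C by ring.
  eapply Rle_lt_trans; [apply Cmod_triangle|]. rewrite !Cmod_mult.
  assert (Cy : Cmod y <= B).
  { unfold B. replace y with ((y - y0) + y0)%C by ring. eapply Rle_trans; [apply Cmod_triangle|]. lra. }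
  pose proof (Cmod_ge_0 (x - x0)). pose proof (Cmod_ge_0 (y - y0)). pose proof (Cmod_ge_0 x0).
  assert (E : e / (2 * (A + B)) * (A + B) = e / 2) by (field; lra).
  assert (T1 : Cmod (x - x0) * Cmod y <= e / (2 * (A + B)) * B)
    by (apply Rmult_le_compat; [apply Cmod_ge_0|apply Cmod_ge_0|lra|lra]).
  assert (T2 : Cmod x0 * Cmod (y - y0) <= A * (e / (2 * (A + B))))
    by (apply Rmult_le_compat; [apply Cmod_ge_0|apply Cmod_ge_0|unfold A; lra|lra]).
  assert (E2 : e / (2 * (A + B)) * B + A * (e / (2 * (A + B))) = e / 2) by (field; lra).
  lra.
Qed.


(** * Differential calculus for [C -> C] and [R -> C] *)

(* Epsilon-delta derivatives and continuity stated with [Cmod].  [cder] agrees with Coquelicot's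
   [is_derive] on [C_AbsRing] (lemmas [cder_of_is_derive], [is_derive_of_cder]); the direct form
   avoids converting between the [Cmod]-balls of [C_AbsRing] and the product balls of
   [C_R_NormedModule], in which [RInt] takes its values. *)
Definition cder (f : C -> C) (z l : C) : Prop :=
  forall eps, 0 < eps -> exists d, 0 < d /\
    forall k : C, Cmod k < d -> Cmod (f (z + k) - f z - k * l)%C <= eps * Cmod k.

Definition ccont (f : C -> C) (z : C) : Prop :=
  forall eps, 0 < eps -> exists d, 0 < d /\
    forall w : C, Cmod (w - z) < d -> Cmod (f w - f z) < eps.

Definition rder (F : R -> C) (s : R) (L : C) : Prop :=
  forall eps, 0 < eps -> exists d, 0 < d /\
    forall h : R, Rabs h < d -> Cmod (F (s + h)%R - F s - RtoC h * L)%C <= eps * Rabs h.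

Definition rcont (F : R -> C) (s : R) : Prop :=
  forall eps, 0 < eps -> exists d, 0 < d /\
    forall t : R, Rabs (t - s) < d -> Cmod (F t - F s) < eps.

Lemma ballC_of_Cmod (x y : C) (e : R) : Cmod (y - x) < e -> @ball C_UniformSpace x e y.
Proof.
  intros H. split; simpl; unfold ball; simpl; unfold AbsRing_ball, abs, minus, plus, opp; simpl.
  - eapply Rle_lt_trans; [|apply H]. pose proof (re_le_Cmod (y - x)). simpl in H0. exact H0.
  - eapply Rle_lt_trans; [|apply H]. pose proof (im_le_Cmod (y - x)). simpl in H0. exact H0.
Qed.

Lemma ballR (x y e : R) : @ball R_UniformSpace x e y <-> Rabs (y - x) < e.
Proof. reflexivity. Qed.

Lemma cder_of_is_derive (f : C -> C) z l :
  @is_derive C_AbsRing C_NormedModule f z l -> cder f z l.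
Proof.
  intros [_ Hd] eps Heps.
  specialize (Hd z (fun P H => H)).
  destruct (Hd (mkposreal eps Heps)) as [d Hb]. simpl in Hb.
  exists d. split; [apply cond_pos|]. intros k Hk.
  specialize (Hb (z + k)%C). 
  assert (B : @ball (AbsRing_UniformSpace C_AbsRing) z d (z + k)%C).
  { change (Cmod (z + k - z)%C < d). replace (z + k - z)%C with k by ring. exact Hk. }
  specialize (Hb B).
  change (Cmod (f (z + k)%C - f z - (z + k - z) * l)%C <= eps * Cmod (z + k - z)%C) in Hb.
  replace (z + k - z)%C with k in Hb by ring. exact Hb.
Qed.

Lemma is_derive_of_cder (f : C -> C) z l :
  cder f z l -> @is_derive C_AbsRing C_NormedModule f z l.
Proof.
  intros H. split; [apply is_linear_scal_l|].
  intros x Hx. apply (@is_filter_lim_locally_unique C_AbsRing (AbsRing_NormedModule C_AbsRing)) in Hx.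
  subst x.
  intros [eps Heps]. destruct (H eps Heps) as [d [Hd Hk]].
  exists (mkposreal d Hd). intros y Hy. change C in y.
  change (Cmod (y - z)%C < d) in Hy.
  specialize (Hk (y - z)%C Hy).
  replace (z + (y - z))%C with y in Hk by ring. exact Hk.
Qed.

Lemma scalCR (h : R) (L : C) : @scal R_AbsRing C_R_NormedModule h L = (RtoC h * L)%C.
Proof.
  destruct L as [a b]. unfold scal; simpl. unfold prod_scal; simpl. unfold RtoC, Cmult; simpl.
  unfold scal; simpl; unfold mult; simpl. f_equal; ring.
Qed.

Lemma is_derive_of_rder (F : R -> C) s L :
  rder F s L -> @is_derive R_AbsRing C_R_NormedModule F s L.
Proof.
  intros H. split; [apply is_linear_scal_l|].
  intros x Hx. apply (@is_filter_lim_locally_unique R_AbsRing (AbsRing_NormedModule R_AbsRing)) in Hx.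
  subst x.
  intros [eps Heps]. destruct (H eps Heps) as [d [Hd Hk]].
  exists (mkposreal d Hd). intros y Hy. change R in y. apply ballR in Hy. simpl.
  rewrite !norm_C_R_Cmod, scalCR.
  specialize (Hk (y - s) Hy). replace (s + (y - s)) with y in Hk by ring. exact Hk.
Qed.

Lemma continuous_of_rcont (F : R -> C) s :
  rcont F s -> @continuous R_UniformSpace C_R_CompleteNormedModule F s.
Proof.
  intros H. apply (filterlim_locally (F := locally s)). intros [eps Heps].
  destruct (H eps Heps) as [d [Hd Ht]].
  exists (mkposreal d Hd). intros t Ht'. apply ballR in Ht'. simpl.
  apply ballC_of_Cmod. apply Ht. exact Ht'.
Qed.

Lemma ccont_of_cder f z l : cder f z l -> ccont f z.
Proof.
  intros H eps Heps.
  destruct (H 1 ltac:(lra)) as [d [Hd Hk]].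
  exists (Rmin d (eps / (Cmod l + 2))). split.
  { apply Rmin_pos; auto. apply Rdiv_lt_0_compat; auto. pose proof (Cmod_ge_0 l); lra. }
  intros w Hw. specialize (Hk (w - z)%C).
  replace (z + (w - z))%C with w in Hk by ring.
  assert (Hw1 : Cmod (w - z) < d) by (eapply Rlt_le_trans; [apply Hw|apply Rmin_l]).
  specialize (Hk Hw1).
  assert (Hw2 : Cmod (w - z) < eps / (Cmod l + 2)) by (eapply Rlt_le_trans; [apply Hw|apply Rmin_r]).
  pose proof (Cmod_ge_0 l). pose proof (Cmod_ge_0 (w - z)).
  replace (f w - f z)%C with ((f w - f z - (w - z) * l) + (w - z) * l)%C by ring.
  eapply Rle_lt_trans; [apply Cmod_triangle|]. rewrite Cmod_mult.
  apply (Rmult_lt_compat_r (Cmod l + 2)) in Hw2; [|lra].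
  unfold Rdiv in Hw2. rewrite Rmult_assoc, Rinv_l in Hw2 by lra. nra.
Qed.

Lemma rcont_of_rder F s L : rder F s L -> rcont F s.
Proof.
  intros H eps Heps.
  destruct (H 1 ltac:(lra)) as [d [Hd Hk]].
  exists (Rmin d (eps / (Cmod L + 2))). split.
  { apply Rmin_pos; auto. apply Rdiv_lt_0_compat; auto. pose proof (Cmod_ge_0 L); lra. }
  intros t Ht. specialize (Hk (t - s)).
  replace (s + (t - s)) with t in Hk by ring.
  assert (Hw1 : Rabs (t - s) < d) by (eapply Rlt_le_trans; [apply Ht|apply Rmin_l]).
  specialize (Hk Hw1).
  assert (Hw2 : Rabs (t - s) < eps / (Cmod L + 2)) by (eapply Rlt_le_trans; [apply Ht|apply Rmin_r]).
  pose proof (Cmod_ge_0 L). pose proof (Rabs_pos (t - s)).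
  replace (F t - F s)%C with ((F t - F s - RtoC (t - s)%R * L) + RtoC (t - s)%R * L)%C by ring.
  eapply Rle_lt_trans; [apply Cmod_triangle|]. rewrite Cmod_RtoC_mult.
  apply (Rmult_lt_compat_r (Cmod L + 2)) in Hw2; [|lra].
  unfold Rdiv in Hw2. rewrite Rmult_assoc, Rinv_l in Hw2 by lra. nra.
Qed.

Definition cnear (P : C -> Prop) := exists d, 0 < d /\ forall k, Cmod k < d -> P k.

Definition rnear (P : R -> Prop) := exists d, 0 < d /\ forall h, Rabs h < d -> P h.

Lemma cnear_and P Q : cnear P -> cnear Q -> cnear (fun k => P k /\ Q k).
Proof.
  intros [d1 [H1 P1]] [d2 [H2 P2]]. exists (Rmin d1 d2). split; [apply Rmin_pos; auto|].
  intros k Hk. split; [apply P1|apply P2]; eapply Rlt_le_trans; eauto; [apply Rmin_l|apply Rmin_r].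
Qed.

Lemma rnear_and P Q : rnear P -> rnear Q -> rnear (fun k => P k /\ Q k).
Proof.
  intros [d1 [H1 P1]] [d2 [H2 P2]]. exists (Rmin d1 d2). split; [apply Rmin_pos; auto|].
  intros k Hk. split; [apply P1|apply P2]; eapply Rlt_le_trans; eauto; [apply Rmin_l|apply Rmin_r].
Qed.

Lemma ccont_near f z : ccont f z -> forall eps, 0 < eps -> cnear (fun k => Cmod (f (z + k) - f z)%C < eps).
Proof.
  intros H eps He. destruct (H eps He) as [d [Hd P]]. exists d; split; auto.
  intros k Hk. apply P. replace (z + k - z)%C with k by ring. auto.
Qed.

Lemma rcont_near F s : rcont F s -> forall eps, 0 < eps -> rnear (fun h => Cmod (F (s + h)%R - F s)%C < eps).
Proof.
  intros H eps He. destruct (H eps He) as [d [Hd P]]. exists d; split; auto.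
  intros k Hk. apply P. replace (s + k - s) with k by ring. auto.
Qed.


Lemma ccont_const c z : ccont (fun _ => c) z.
Proof.
  intros e He. exists 1. split; [lra|]. intros. replace (c - c)%C with (RtoC 0) by ring.
  rewrite Cmod_0. auto.
Qed.

Lemma ccont_id z : ccont (fun w => w) z.
Proof. intros e He. exists e. split; auto. Qed.

Lemma ccont_plus f g z : ccont f z -> ccont g z -> ccont (fun w => f w + g w)%C z.
Proof.
  intros HF HG e He. destruct (HF (e/2) ltac:(lra)) as [d1 [H1 P1]].
  destruct (HG (e/2) ltac:(lra)) as [d2 [H2 P2]].
  exists (Rmin d1 d2). split; [apply Rmin_pos; auto|]. intros t Ht.
  assert (A1 := P1 t ltac:(eapply Rlt_le_trans; [apply Ht|apply Rmin_l])).
  assert (A2 := P2 t ltac:(eapply Rlt_le_trans; [apply Ht|apply Rmin_r])).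
  replace (f t + g t - (f z + g z))%C with ((f t - f z) + (g t - g z))%C by ring.
  eapply Rle_lt_trans; [apply Cmod_triangle|]. lra.
Qed.

Lemma ccont_mult f g z : ccont f z -> ccont g z -> ccont (fun w => f w * g w)%C z.
Proof.
  intros Hf Hg e He. destruct (Cmult_close (f z) (g z) e He) as [d [Hd P]].
  destruct (Hf d Hd) as [d1 [Hd1 P1]]. destruct (Hg d Hd) as [d2 [Hd2 P2]].
  exists (Rmin d1 d2). split; [apply Rmin_pos; auto|]. intros w Hw. apply P.
  - apply P1. eapply Rlt_le_trans; [apply Hw|apply Rmin_l].
  - apply P2. eapply Rlt_le_trans; [apply Hw|apply Rmin_r].
Qed.

Lemma ccont_minus f g z : ccont f z -> ccont g z -> ccont (fun w => f w - g w)%C z.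
Proof.
  intros Hf Hg. apply ccont_plus; auto. intros e He. destruct (Hg e He) as [d [Hd P]]. exists d. split; auto.
  intros w Hw. replace (- g w - - g z)%C with (- (g w - g z))%C by ring. rewrite Cmod_opp. auto.
Qed.

Lemma ccont_comp (g f : C -> C) z : ccont f z -> ccont g (f z) -> ccont (fun w => g (f w)) z.
Proof.
  intros HF Hg e He. destruct (Hg e He) as [d1 [H1 P1]]. destruct (HF d1 H1) as [d2 [H2 P2]].
  exists d2. split; auto.
Qed.

Lemma ccont_inv (z : C) : z <> RtoC 0 -> ccont (fun w => / w)%C z.
Proof.
  intros Hz e He. assert (Hm : 0 < Cmod z) by (apply (proj1 (Cmod_gt_0 z)); exact Hz).
  exists (Rmin (Cmod z / 2) (e * (Cmod z * Cmod z) / 2)). split.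
  { apply Rmin_pos; [lra|]. apply Rdiv_lt_0_compat; [|lra]. apply Rmult_lt_0_compat; nra. }
  intros w Hw.
  assert (Hw1 : Cmod (w - z) < Cmod z / 2) by (eapply Rlt_le_trans; [apply Hw|apply Rmin_l]).
  assert (Hw2 : Cmod (w - z) < e * (Cmod z * Cmod z) / 2) by (eapply Rlt_le_trans; [apply Hw|apply Rmin_r]).
  assert (Cw : Cmod z / 2 <= Cmod w).
  { pose proof (Cmod_triangle_rev z w). rewrite Cmod_sub_sym in H. lra. }
  assert (Hw0 : w <> 0%C) by (intro; subst; rewrite Cmod_0 in Cw; lra).
  replace (/ w - / z)%C with ((z - w) * / w * / z)%C by (field; auto).
  rewrite !Cmod_mult, !Cmod_inv by auto. rewrite Cmod_sub_sym.
  apply Rle_lt_trans with (Cmod (w - z) * (2 / Cmod z) * / Cmod z).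
  { apply Rmult_le_compat_r; [left; apply Rinv_0_lt_compat; lra|].
    apply Rmult_le_compat_l; [apply Cmod_ge_0|].
    replace (2 / Cmod z) with (/ (Cmod z / 2)) by (field; lra).
    apply Rinv_le_contravar; lra. }
  replace (Cmod (w - z) * (2 / Cmod z) * / Cmod z) with (Cmod (w - z) * 2 / (Cmod z * Cmod z))
    by (field; lra).
  apply Rlt_le_trans with (e * (Cmod z * Cmod z) / 2 * 2 / (Cmod z * Cmod z)).
  { unfold Rdiv. apply Rmult_lt_compat_r; [apply Rinv_0_lt_compat; nra|]. lra. }
  right. field. lra.
Qed.

Lemma rcont_const c s : rcont (fun _ => c) s.
Proof.
  intros e He. exists 1. split; [lra|]. intros. replace (c - c)%C with (RtoC 0) by ring.
  rewrite Cmod_0. auto.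
Qed.

Lemma rcont_plus F G s : rcont F s -> rcont G s -> rcont (fun t => F t + G t)%C s.
Proof.
  intros HF HG e He. destruct (HF (e/2) ltac:(lra)) as [d1 [H1 P1]].
  destruct (HG (e/2) ltac:(lra)) as [d2 [H2 P2]].
  exists (Rmin d1 d2). split; [apply Rmin_pos; auto|]. intros t Ht.
  assert (A1 := P1 t ltac:(eapply Rlt_le_trans; [apply Ht|apply Rmin_l])).
  assert (A2 := P2 t ltac:(eapply Rlt_le_trans; [apply Ht|apply Rmin_r])).
  replace (F t + G t - (F s + G s))%C with ((F t - F s) + (G t - G s))%C by ring.
  eapply Rle_lt_trans; [apply Cmod_triangle|]. lra.
Qed.

Lemma rcont_opp F s : rcont F s -> rcont (fun t => - F t)%C s.
Proof.
  intros HF e He. destruct (HF e He) as [d [H P]]. exists d. split; auto. intros t Ht.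
  replace (- F t - - F s)%C with (- (F t - F s))%C by ring. rewrite Cmod_opp. auto.
Qed.

Lemma rcont_minus F G s : rcont F s -> rcont G s -> rcont (fun t => F t - G t)%C s.
Proof. intros. apply rcont_plus; auto. apply rcont_opp; auto. Qed.

Lemma rcont_mult F G s : rcont F s -> rcont G s -> rcont (fun t => F t * G t)%C s.
Proof.
  intros HF HG e He. destruct (Cmult_close (F s) (G s) e He) as [d [Hd P]].
  destruct (HF d Hd) as [d1 [Hd1 P1]]. destruct (HG d Hd) as [d2 [Hd2 P2]].
  exists (Rmin d1 d2). split; [apply Rmin_pos; auto|]. intros t Ht. apply P.
  - apply P1. eapply Rlt_le_trans; [apply Ht|apply Rmin_l].
  - apply P2. eapply Rlt_le_trans; [apply Ht|apply Rmin_r].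
Qed.

Lemma rcont_comp (g : C -> C) F s : rcont F s -> ccont g (F s) -> rcont (fun t => g (F t)) s.
Proof.
  intros HF Hg e He. destruct (Hg e He) as [d1 [H1 P1]]. destruct (HF d1 H1) as [d2 [H2 P2]].
  exists d2. split; auto.
Qed.

Lemma rcont_RtoC s : rcont (fun t => RtoC t) s.
Proof.
  intros e He. exists e. split; auto. intros t Ht.
  replace (RtoC t - RtoC s)%C with (RtoC (t - s)) by (unfold RtoC, Cminus, Cplus, Copp; simpl; f_equal; ring).
  rewrite Cmod_R. auto.
Qed.


Lemma Rdiv_pos_succ e a : 0 < e -> 0 <= a -> 0 < e / (a + 1).
Proof. intros. apply Rdiv_lt_0_compat; lra. Qed.

Lemma cder_increment_bound f z l : cder f z l ->
  cnear (fun k => Cmod (f (z + k)%C - f z)%C <= (Cmod l + 1) * Cmod k).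
Proof.
  intros H. destruct (H 1 ltac:(lra)) as [d [Hd P]]. exists d. split; auto. intros k Hk.
  specialize (P k Hk). replace (f (z + k)%C - f z)%C with ((f (z + k)%C - f z - k * l) + k * l)%C by ring.
  eapply Rle_trans; [apply Cmod_triangle|]. rewrite Cmod_mult. nra.
Qed.

Lemma rder_increment_bound F s L : rder F s L ->
  rnear (fun h => Cmod (F (s + h)%R - F s)%C <= (Cmod L + 1) * Rabs h).
Proof.
  intros H. destruct (H 1 ltac:(lra)) as [d [Hd P]]. exists d. split; auto. intros k Hk.
  specialize (P k Hk).
  replace (F (s + k)%R - F s)%C with ((F (s + k)%R - F s - RtoC k * L) + RtoC k * L)%C by ring.
  eapply Rle_trans; [apply Cmod_triangle|]. rewrite Cmod_RtoC_mult. nra.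
Qed.

Lemma cder_ext_near f g z l d : 0 < d -> (forall w, Cmod (w - z) < d -> f w = g w) -> cder f z l ->
  cder g z l.
Proof.
  intros Hd E H e He. destruct (H e He) as [d1 [H1 P]]. exists (Rmin d d1). split; [apply Rmin_pos; auto|].
  intros k Hk. rewrite <- !E. apply P. eapply Rlt_le_trans; [apply Hk|apply Rmin_r].
  replace (z - z)%C with (RtoC 0) by ring. rewrite Cmod_0. auto.
  replace (z + k - z)%C with k by ring. eapply Rlt_le_trans; [apply Hk|apply Rmin_l].
Qed.

Lemma cder_unique f z l1 l2 : cder f z l1 -> cder f z l2 -> l1 = l2.
Proof.
  intros H1 H2. destruct (Ceq_dec l1 l2) as [|Hne]; auto. exfalso.
  assert (Hm : 0 < Cmod (l1 - l2)) by (apply (proj1 (Cmod_gt_0 _)); intro E; apply Hne; 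
     replace l1 with ((l1 - l2) + l2)%C by ring; rewrite E; ring).
  set (e := Cmod (l1 - l2) / 4).
  destruct (H1 e ltac:(unfold e; lra)) as [d1 [Hd1 P1]].
  destruct (H2 e ltac:(unfold e; lra)) as [d2 [Hd2 P2]].
  set (k := RtoC (Rmin d1 d2 / 2)).
  assert (Hk : Cmod k = Rmin d1 d2 / 2).
  { unfold k. rewrite Cmod_R. apply Rabs_pos_eq. pose proof (Rmin_pos d1 d2 Hd1 Hd2). lra. }
  assert (Hk0 : 0 < Cmod k) by (rewrite Hk; pose proof (Rmin_pos d1 d2 Hd1 Hd2); lra).
  specialize (P1 k ltac:(rewrite Hk; pose proof (Rmin_l d1 d2); pose proof (Rmin_pos d1 d2 Hd1 Hd2); lra)).
  specialize (P2 k ltac:(rewrite Hk; pose proof (Rmin_r d1 d2); pose proof (Rmin_pos d1 d2 Hd1 Hd2); lra)).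
  assert (E : (k * (l1 - l2))%C = ((f (z + k)%C - f z - k * l2) - (f (z + k)%C - f z - k * l1))%C) by ring.
  assert (Cmod (k * (l1 - l2)) <= 2 * e * Cmod k).
  { rewrite E. eapply Rle_trans; [apply Cmod_minus_le|]. lra. }
  rewrite Cmod_mult in H. unfold e in H. nra.
Qed.

Lemma cder_id z : cder (fun w => w) z 1.
Proof.
  intros e He. exists 1. split; [lra|]. intros k Hk. replace (z + k - z - k * 1)%C with (RtoC 0) by ring.
  rewrite Cmod_0. pose proof (Cmod_ge_0 k). nra.
Qed.

Lemma cder_plus f g z lf lg : cder f z lf -> cder g z lg -> cder (fun w => f w + g w)%C z (lf + lg)%C.
Proof.
  intros Hf Hg e He. destruct (cnear_and _ _ (Hf (e/2) ltac:(lra)) (Hg (e/2) ltac:(lra))) as [d [Hd P]].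
  exists d. split; auto. intros k Hk. destruct (P k Hk) as [A B].
  replace (f (z + k)%C + g (z + k)%C - (f z + g z) - k * (lf + lg))%C with
    ((f (z + k)%C - f z - k * lf) + (g (z + k)%C - g z - k * lg))%C by ring.
  eapply Rle_trans; [apply Cmod_triangle|]. lra.
Qed.

Lemma cder_scal c f z l : cder f z l -> cder (fun w => c * f w)%C z (c * l)%C.
Proof.
  intros Hf e He. destruct (Hf (e / (Cmod c + 1)) (Rdiv_pos_succ _ _ He (Cmod_ge_0 c))) as [d [Hd P]].
  exists d. split; auto. intros k Hk. specialize (P k Hk).
  replace (c * f (z + k)%C - c * f z - k * (c * l))%C with (c * (f (z + k)%C - f z - k * l))%C by ring.
  rewrite Cmod_mult. pose proof (Cmod_ge_0 c). pose proof (Cmod_ge_0 k).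
  apply Rle_trans with (Cmod c * (e / (Cmod c + 1) * Cmod k)). apply Rmult_le_compat_l; auto.
  apply Rle_trans with ((Cmod c + 1) * (e / (Cmod c + 1) * Cmod k)). apply Rmult_le_compat_r; [|lra].
  apply Rmult_le_pos; [left; apply Rdiv_pos_succ; auto|auto].
  right. field. lra.
Qed.

Lemma cder_mult f g z lf lg : cder f z lf -> cder g z lg ->
  cder (fun w => f w * g w)%C z (lf * g z + f z * lg)%C.
Proof.
  intros Hf Hg e He.
  set (B := Cmod (g z) + 1). set (A := Cmod (f z) + 1). set (L := Cmod lf + 1).
  assert (HB : 0 < B) by (unfold B; pose proof (Cmod_ge_0 (g z)); lra).
  assert (HA : 0 < A) by (unfold A; pose proof (Cmod_ge_0 (f z)); lra).
  assert (HL : 0 < L) by (unfold L; pose proof (Cmod_ge_0 lf); lra).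
  assert (Hgc := ccont_near _ _ (ccont_of_cder _ _ _ Hg) (Rmin 1 (e / (3 * L))) ltac:(apply Rmin_pos;
      [lra|apply Rdiv_lt_0_compat; lra])).
  destruct (cnear_and _ _ Hgc (cnear_and _ _ (Hf (e / (3 * B)) ltac:(apply Rdiv_lt_0_compat; lra))
      (Hg (e / (3 * A)) ltac:(apply Rdiv_lt_0_compat; lra)))) as [d [Hd P]].
  exists d. split; auto. intros k Hk. destruct (P k Hk) as [C1 [C2 C3]].
  replace (f (z + k)%C * g (z + k)%C - f z * g z - k * (lf * g z + f z * lg))%C with
    ((f (z + k)%C - f z - k * lf) * g (z + k)%C + f z * (g (z + k)%C - g z - k * lg)
        + k * lf * (g (z + k)%C - g z))%C by ring.
  eapply Rle_trans; [apply Cmod_triangle3|]. rewrite !Cmod_mult.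
  assert (Gk : Cmod (g (z + k)%C) <= B).
  { unfold B. replace (g (z + k)%C) with ((g (z + k)%C - g z) + g z)%C by ring. eapply Rle_trans;
      [apply Cmod_triangle|].
    pose proof (Rmin_l 1 (e / (3 * L))). lra. }
  assert (Gd : Cmod (g (z + k)%C - g z) <= e / (3 * L)) by (pose proof (Rmin_r 1 (e / (3 * L))); lra).
  pose proof (Cmod_ge_0 k). pose proof (Cmod_ge_0 (f (z + k)%C - f z - k * lf)).
  pose proof (Cmod_ge_0 (g (z + k)%C - g z - k * lg)). pose proof (Cmod_ge_0 (g (z + k)%C - g z)).
  assert (T1 : Cmod (f (z + k)%C - f z - k * lf) * Cmod (g (z + k)%C) <= e / (3 * B) * Cmod k * B)
    by (apply Rmult_le_compat; auto; apply Cmod_ge_0).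
  assert (T2 : Cmod (f z) * Cmod (g (z + k)%C - g z - k * lg) <= A * (e / (3 * A) * Cmod k))
    by (apply Rmult_le_compat; auto; [apply Cmod_ge_0|unfold A; lra]).
  assert (T3 : Cmod k * Cmod lf * Cmod (g (z + k)%C - g z) <= Cmod k * L * (e / (3 * L))).
  { apply Rmult_le_compat; auto. apply Rmult_le_pos; auto; apply Cmod_ge_0.
    apply Rmult_le_compat_l; auto. unfold L; lra. }
  replace (e / (3 * B) * Cmod k * B) with (e / 3 * Cmod k) in T1 by (field; lra).
  replace (A * (e / (3 * A) * Cmod k)) with (e / 3 * Cmod k) in T2 by (field; lra).
  replace (Cmod k * L * (e / (3 * L))) with (e / 3 * Cmod k) in T3 by (field; lra).
  lra.
Qed.

Lemma cder_comp (g f : C -> C) z lf lg : cder f z lf -> cder g (f z) lg ->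
  cder (fun w => g (f w)) z (lg * lf)%C.
Proof.
  intros Hf Hg e He.
  set (L := Cmod lf + 1). set (G := Cmod lg + 1).
  assert (HL : 0 < L) by (unfold L; pose proof (Cmod_ge_0 lf); lra).
  assert (HG : 0 < G) by (unfold G; pose proof (Cmod_ge_0 lg); lra).
  destruct (Hg (e / (2 * L)) ltac:(apply Rdiv_lt_0_compat; lra)) as [dg [Hdg Pg]].
  assert (Hfc := ccont_near _ _ (ccont_of_cder _ _ _ Hf) dg Hdg).
  destruct (cnear_and _ _ Hfc (cnear_and _ _ (cder_increment_bound _ _ _ Hf) (Hf (e / (2 * G))
      ltac:(apply Rdiv_lt_0_compat; lra)))) as [d [Hd P]].
  exists d. split; auto. intros k Hk. destruct (P k Hk) as [C1 [C2 C3]].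
  set (m := (f (z + k)%C - f z)%C). specialize (Pg m C1).
  replace (f z + m)%C with (f (z + k)%C) in Pg by (unfold m; ring).
  replace (g (f (z + k)%C) - g (f z) - k * (lg * lf))%C with
     ((g (f (z + k)%C) - g (f z) - m * lg) + lg * (m - k * lf))%C by (unfold m; ring).
  eapply Rle_trans; [apply Cmod_triangle|]. rewrite Cmod_mult.
  fold L in C2. fold m in C2. 
  pose proof (Cmod_ge_0 k). pose proof (Cmod_ge_0 m). pose proof (Cmod_ge_0 lg).
  assert (T1 : e / (2 * L) * Cmod m <= e / (2 * L) * (L * Cmod k)).
  { apply Rmult_le_compat_l; [left; apply Rdiv_lt_0_compat; lra|]. auto. }
  assert (T2 : Cmod lg * Cmod (m - k * lf) <= G * (e / (2 * G) * Cmod k)).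
  { apply Rmult_le_compat; auto. apply Cmod_ge_0. unfold G; lra. }
  replace (e / (2 * L) * (L * Cmod k)) with (e/2 * Cmod k) in T1 by (field; lra).
  replace (G * (e / (2 * G) * Cmod k)) with (e/2 * Cmod k) in T2 by (field; lra).
  lra.
Qed.

Lemma cder_inv (z : C) : z <> RtoC 0 -> cder (fun w => / w)%C z (- / (z * z))%C.
Proof.
  intros Hz e He. assert (Hm : 0 < Cmod z) by (apply (proj1 (Cmod_gt_0 z)); exact Hz).
  exists (Rmin (Cmod z / 2) (e * (Cmod z * Cmod z * Cmod z) / 2)). split.
  { apply Rmin_pos; [lra|]. apply Rdiv_lt_0_compat; [|lra]. repeat apply Rmult_lt_0_compat; nra. }
  intros k Hk.
  assert (Hk1 : Cmod k < Cmod z / 2) by (eapply Rlt_le_trans; [apply Hk|apply Rmin_l]).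
  assert (Hk2 : Cmod k < e * (Cmod z * Cmod z * Cmod z) / 2)
    by (eapply Rlt_le_trans; [apply Hk|apply Rmin_r]).
  assert (Cw : Cmod z / 2 <= Cmod (z + k)).
  { pose proof (Cmod_triangle_rev z (- k)). replace (z - - k)%C with (z + k)%C in H by ring. rewrite Cmod_opp in H. lra. }
  assert (Hw0 : (z + k)%C <> RtoC 0) by (intro E; rewrite E, Cmod_0 in Cw; lra).
  replace (/ (z + k) - / z - k * - / (z * z))%C with (k * k * / (z * z) * / (z + k))%C
    by (field; repeat split; auto).
  assert (Hzz : (z * z)%C <> RtoC 0)
    by (intro E; apply (f_equal Cmod) in E; rewrite Cmod_mult, Cmod_0 in E; nra).
  rewrite !Cmod_mult, (Cmod_inv (z * z)%C Hzz), (Cmod_inv (z + k)%C Hw0), Cmod_mult.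
  pose proof (Cmod_ge_0 k).
  apply Rle_trans with (Cmod k * Cmod k * / (Cmod z * Cmod z) * / (Cmod z / 2)).
  { apply Rmult_le_compat_l. apply Rmult_le_pos; [nra|left; apply Rinv_0_lt_compat; nra].
    apply Rinv_le_contravar; lra. }
  replace (Cmod k * Cmod k * / (Cmod z * Cmod z) * / (Cmod z / 2)) with
     (Cmod k * (2 / (Cmod z * Cmod z * Cmod z)) * Cmod k) by (field; lra).
  apply Rmult_le_compat_r; auto.
  apply Rle_trans with (e * (Cmod z * Cmod z * Cmod z) / 2 * (2 / (Cmod z * Cmod z * Cmod z))).
  { apply Rmult_le_compat_r; [left; apply Rdiv_lt_0_compat; [lra|repeat apply Rmult_lt_0_compat; lra]|lra]. }
  right. field. lra.
Qed.

Lemma cder_one_minus z : cder (fun w => 1 - w)%C z (- RtoC 1)%C.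
Proof.
  intros e He. exists 1. split; [lra|]. intros k Hk.
  replace (1 - (z + k) - (1 - z) - k * - RtoC 1)%C with (RtoC 0) by ring.
  rewrite Cmod_0. pose proof (Cmod_ge_0 k). nra.
Qed.

Lemma rder_const c s : rder (fun _ => c) s 0.
Proof.
  intros e He. exists 1. split; [lra|]. intros k Hk.
  replace (c - c - RtoC k * 0)%C with (RtoC 0) by ring.
  rewrite Cmod_0. pose proof (Rabs_pos k). nra.
Qed.

Lemma rder_plus F G s LF LG : rder F s LF -> rder G s LG -> rder (fun t => F t + G t)%C s (LF + LG)%C.
Proof.
  intros Hf Hg e He. destruct (rnear_and _ _ (Hf (e/2) ltac:(lra)) (Hg (e/2) ltac:(lra))) as [d [Hd P]].
  exists d. split; auto. intros k Hk. destruct (P k Hk) as [A B].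
  replace (F (s + k)%R + G (s + k)%R - (F s + G s) - RtoC k * (LF + LG))%C with
    ((F (s + k)%R - F s - RtoC k * LF) + (G (s + k)%R - G s - RtoC k * LG))%C by ring.
  eapply Rle_trans; [apply Cmod_triangle|]. lra.
Qed.

Lemma rder_scal c F s L : rder F s L -> rder (fun t => c * F t)%C s (c * L)%C.
Proof.
  intros Hf e He. destruct (Hf (e / (Cmod c + 1)) (Rdiv_pos_succ _ _ He (Cmod_ge_0 c))) as [d [Hd P]].
  exists d. split; auto. intros k Hk. specialize (P k Hk).
  replace (c * F (s + k)%R - c * F s - RtoC k * (c * L))%C with (c * (F (s + k)%R - F s - RtoC k * L))%C
    by ring.
  rewrite Cmod_mult. pose proof (Cmod_ge_0 c). pose proof (Rabs_pos k).
  apply Rle_trans with (Cmod c * (e / (Cmod c + 1) * Rabs k)). apply Rmult_le_compat_l; auto.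
  apply Rle_trans with ((Cmod c + 1) * (e / (Cmod c + 1) * Rabs k)). apply Rmult_le_compat_r; [|lra].
  apply Rmult_le_pos; [left; apply Rdiv_pos_succ; auto|auto].
  right. field. lra.
Qed.

Lemma rder_mult F G s LF LG : rder F s LF -> rder G s LG ->
  rder (fun t => F t * G t)%C s (LF * G s + F s * LG)%C.
Proof.
  intros Hf Hg e He.
  set (B := Cmod (G s) + 1). set (A := Cmod (F s) + 1). set (L := Cmod LF + 1).
  assert (HB : 0 < B) by (unfold B; pose proof (Cmod_ge_0 (G s)); lra).
  assert (HA : 0 < A) by (unfold A; pose proof (Cmod_ge_0 (F s)); lra).
  assert (HL : 0 < L) by (unfold L; pose proof (Cmod_ge_0 LF); lra).
  assert (Hgc := rcont_near _ _ (rcont_of_rder _ _ _ Hg) (Rmin 1 (e / (3 * L))) ltac:(apply Rmin_pos;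
      [lra|apply Rdiv_lt_0_compat; lra])).
  destruct (rnear_and _ _ Hgc (rnear_and _ _ (Hf (e / (3 * B)) ltac:(apply Rdiv_lt_0_compat; lra))
      (Hg (e / (3 * A)) ltac:(apply Rdiv_lt_0_compat; lra)))) as [d [Hd P]].
  exists d. split; auto. intros k Hk. destruct (P k Hk) as [C1 [C2 C3]].
  replace (F (s + k)%R * G (s + k)%R - F s * G s - RtoC k * (LF * G s + F s * LG))%C with
    ((F (s + k)%R - F s - RtoC k * LF) * G (s + k)%R + F s * (G (s + k)%R - G s - RtoC k * LG)
        + RtoC k * LF * (G (s + k)%R - G s))%C by ring.
  eapply Rle_trans; [apply Cmod_triangle3|]. rewrite !Cmod_mult, Cmod_R.
  assert (Gk : Cmod (G (s + k)%R) <= B).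
  { unfold B. replace (G (s + k)%R) with ((G (s + k)%R - G s) + G s)%C by ring. eapply Rle_trans;
      [apply Cmod_triangle|].
    pose proof (Rmin_l 1 (e / (3 * L))). lra. }
  assert (Gd : Cmod (G (s + k)%R - G s) <= e / (3 * L)) by (pose proof (Rmin_r 1 (e / (3 * L))); lra).
  pose proof (Rabs_pos k). pose proof (Cmod_ge_0 (F (s + k)%R - F s - RtoC k * LF)).
  pose proof (Cmod_ge_0 (G (s + k)%R - G s - RtoC k * LG)). pose proof (Cmod_ge_0 (G (s + k)%R - G s)).
  assert (T1 : Cmod (F (s + k)%R - F s - RtoC k * LF) * Cmod (G (s + k)%R) <= e / (3 * B) * Rabs k * B)
    by (apply Rmult_le_compat; auto; apply Cmod_ge_0).
  assert (T2 : Cmod (F s) * Cmod (G (s + k)%R - G s - RtoC k * LG) <= A * (e / (3 * A) * Rabs k))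
    by (apply Rmult_le_compat; auto; [apply Cmod_ge_0|unfold A; lra]).
  assert (T3 : Rabs k * Cmod LF * Cmod (G (s + k)%R - G s) <= Rabs k * L * (e / (3 * L))).
  { apply Rmult_le_compat; auto. apply Rmult_le_pos; auto; apply Cmod_ge_0.
    apply Rmult_le_compat_l; auto. unfold L; lra. }
  replace (e / (3 * B) * Rabs k * B) with (e / 3 * Rabs k) in T1 by (field; lra).
  replace (A * (e / (3 * A) * Rabs k)) with (e / 3 * Rabs k) in T2 by (field; lra).
  replace (Rabs k * L * (e / (3 * L))) with (e / 3 * Rabs k) in T3 by (field; lra).
  lra.
Qed.

Lemma rder_mult_const_r (G : R -> C) s L c : rder G s L -> rder (fun s => G s * c)%C s (L * c)%C.
Proof.
  intros H. assert (H2 := rder_mult G (fun _ => c) s L 0 H (rder_const c s)).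
  replace (L * c)%C with (L * c + G s * 0)%C by ring. exact H2.
Qed.

Lemma rder_comp (g : C -> C) (F : R -> C) s L lg : rder F s L -> cder g (F s) lg ->
  rder (fun t => g (F t)) s (lg * L)%C.
Proof.
  intros Hf Hg e He.
  set (L1 := Cmod L + 1). set (G := Cmod lg + 1).
  assert (HL : 0 < L1) by (unfold L1; pose proof (Cmod_ge_0 L); lra).
  assert (HG : 0 < G) by (unfold G; pose proof (Cmod_ge_0 lg); lra).
  destruct (Hg (e / (2 * L1)) ltac:(apply Rdiv_lt_0_compat; lra)) as [dg [Hdg Pg]].
  assert (Hfc := rcont_near _ _ (rcont_of_rder _ _ _ Hf) dg Hdg).
  destruct (rnear_and _ _ Hfc (rnear_and _ _ (rder_increment_bound _ _ _ Hf) (Hf (e / (2 * G))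
      ltac:(apply Rdiv_lt_0_compat; lra)))) as [d [Hd P]].
  exists d. split; auto. intros k Hk. destruct (P k Hk) as [C1 [C2 C3]].
  set (m := (F (s + k)%R - F s)%C). specialize (Pg m C1).
  replace (F s + m)%C with (F (s + k)%R) in Pg by (unfold m; ring).
  replace (g (F (s + k)%R) - g (F s) - RtoC k * (lg * L))%C with
     ((g (F (s + k)%R) - g (F s) - m * lg) + lg * (m - RtoC k * L))%C by (unfold m; ring).
  eapply Rle_trans; [apply Cmod_triangle|]. rewrite Cmod_mult.
  fold L1 in C2. fold m in C2.
  pose proof (Rabs_pos k). pose proof (Cmod_ge_0 m). pose proof (Cmod_ge_0 lg).
  assert (T1 : e / (2 * L1) * Cmod m <= e / (2 * L1) * (L1 * Rabs k)).
  { apply Rmult_le_compat_l; [left; apply Rdiv_lt_0_compat; lra|]. auto. }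
  assert (T2 : Cmod lg * Cmod (m - RtoC k * L) <= G * (e / (2 * G) * Rabs k)).
  { apply Rmult_le_compat; auto. apply Cmod_ge_0. unfold G; lra. }
  replace (e / (2 * L1) * (L1 * Rabs k)) with (e/2 * Rabs k) in T1 by (field; lra).
  replace (G * (e / (2 * G) * Rabs k)) with (e/2 * Rabs k) in T2 by (field; lra).
  lra.
Qed.

Lemma rder_RtoC s : rder (fun t => RtoC t) s 1.
Proof.
  intros e He. exists 1. split; [lra|]. intros k Hk.
  replace (RtoC (s + k)%R - RtoC s - RtoC k * 1)%C with (RtoC 0)
    by (unfold RtoC, Cminus, Cplus, Copp, Cmult; simpl; f_equal; ring).
  rewrite Cmod_0. pose proof (Rabs_pos k). nra.
Qed.

Lemma rder_affine (p q : C) s : rder (fun t => p + RtoC t * q)%C s q.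
Proof.
  intros e He. exists 1. split; [lra|]. intros h Hh.
  replace (p + RtoC (s + h)%R * q - (p + RtoC s * q) - RtoC h * q)%C with (RtoC 0)
    by (unfold RtoC, Cminus, Cplus, Copp, Cmult; simpl; f_equal; ring).
  rewrite Cmod_0. pose proof (Rabs_pos h). nra.
Qed.

Lemma rcont_affine (p q : C) s : rcont (fun t => p + RtoC t * q)%C s.
Proof. eapply rcont_of_rder. apply rder_affine. Qed.

Lemma rder_comp_line (u : C -> C) (p q : C) s l : cder u (p + RtoC s * q)%C l ->
  rder (fun t => u (p + RtoC t * q)%C) s (l * q)%C.
Proof.
  intros H.
  assert (H1 : rder (fun t => (p + RtoC t * q)%C) s q).
  { intros e He. exists 1. split; [lra|]. intros h Hh.
    replace (p + RtoC (s + h)%R * q - (p + RtoC s * q) - RtoC h * q)%C with (RtoC 0)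
      by (unfold RtoC, Cminus, Cplus, Copp, Cmult; simpl; f_equal; ring).
    rewrite Cmod_0. pose proof (Rabs_pos h). nra. }
  apply (rder_comp u _ s q l H1 H).
Qed.

Lemma rder_of_derivable_pair (f1 f2 : R -> R) s l1 l2 : derivable_pt_lim f1 s l1 ->
  derivable_pt_lim f2 s l2 ->
  rder (fun t => (f1 t, f2 t)) s (l1, l2).
Proof.
  intros H1 H2 e He.
  destruct (H1 (e/2) ltac:(lra)) as [d1 P1]. destruct (H2 (e/2) ltac:(lra)) as [d2 P2].
  exists (Rmin d1 d2). split; [apply Rmin_pos; apply cond_pos|]. intros h Hh.
  destruct (Req_dec h 0) as [->|Hh0].
  { rewrite Rplus_0_r, Rabs_R0. replace ((f1 s, f2 s) - (f1 s, f2 s)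
      - RtoC 0 * (l1, l2))%C with (RtoC 0) by ring. rewrite Cmod_0. lra. }
  assert (A1 := P1 h Hh0 ltac:(eapply Rlt_le_trans; [apply Hh|apply Rmin_l])).
  assert (A2 := P2 h Hh0 ltac:(eapply Rlt_le_trans; [apply Hh|apply Rmin_r])).
  eapply Rle_trans; [apply Cmod_le_Rabs_Re_Im|]. simpl.
  assert (Hp : 0 < Rabs h) by (apply Rabs_pos_lt; auto).
  replace (f1 (s + h)%R + - f1 s + - (h * l1 - 0 * l2)) with (h * ((f1 (s + h)%R - f1 s) / h - l1))
    by (field; auto).
  replace (f2 (s + h)%R + - f2 s + - (h * l2 + 0 * l1)) with (h * ((f2 (s + h)%R - f2 s) / h - l2))
    by (field; auto).
  rewrite !Rabs_mult. nra.
Qed.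

Lemma derivable_pt_lim_Re (F : R -> C) s L : rder F s L -> derivable_pt_lim (fun t => Re (F t)) s (Re L).
Proof.
  intros H e He. destruct (H (e/2) ltac:(lra)) as [d [Hd P]].
  exists (mkposreal d Hd). intros h Hh0 Hh. simpl in Hh. specialize (P h Hh).
  assert (Hp : 0 < Rabs h) by (apply Rabs_pos_lt; auto).
  replace ((Re (F (s + h)%R) - Re (F s)) / h - Re L) with (Re (F (s + h)%R - F s - RtoC h * L)%C / h).
  2:{ destruct (F (s + h)%R), (F s), L. simpl. field. auto. }
  unfold Rdiv. rewrite Rabs_mult, Rabs_inv.
  apply Rle_lt_trans with (e / 2 * Rabs h * / Rabs h).
  { apply Rmult_le_compat_r; [left; apply Rinv_0_lt_compat; auto|]. eapply Rle_trans;
      [apply re_le_Cmod|auto]. }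
  field_simplify; lra.
Qed.


(** * Integrals of complex-valued functions *)

Notation CInt F a b := (@RInt C_R_CompleteNormedModule F a b).

Notation CexInt F a b := (@ex_RInt C_R_CompleteNormedModule F a b).

Notation CisInt F a b l := (@is_RInt C_R_NormedModule F a b l).

Lemma CexInt_of_rcont (F : R -> C) a b : a <= b -> (forall t, a <= t <= b -> rcont F t) -> CexInt F a b.
Proof.
  intros Hab H. apply ex_RInt_continuous. intros z Hz.
  rewrite Rmin_left, Rmax_right in Hz by lra.
  apply continuous_of_rcont. apply H. auto.
Qed.

Lemma CisInt_RInt (F : R -> C) a b : CexInt F a b -> CisInt F a b (CInt F a b).
Proof. intros H. apply (RInt_correct (V := C_R_CompleteNormedModule)). auto. Qed.

Lemma CInt_unique (F : R -> C) a b l : CisInt F a b l -> CInt F a b = l.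
Proof. intros H. apply (is_RInt_unique (V := C_R_CompleteNormedModule)). auto. Qed.

Lemma CisInt_plus (F G : R -> C) a b l1 l2 : CisInt F a b l1 -> CisInt G a b l2 ->
  CisInt (fun t => F t + G t)%C a b (l1 + l2)%C.
Proof. intros H1 H2. apply (is_RInt_plus (V := C_R_NormedModule) F G a b l1 l2 H1 H2). Qed.

Lemma CisInt_minus (F G : R -> C) a b l1 l2 : CisInt F a b l1 -> CisInt G a b l2 ->
  CisInt (fun t => F t - G t)%C a b (l1 - l2)%C.
Proof. intros H1 H2. apply (is_RInt_minus (V := C_R_NormedModule) F G a b l1 l2 H1 H2). Qed.

Lemma CisInt_ext (F G : R -> C) a b l : (forall t, Rmin a b < t < Rmax a b -> F t = G t) ->
  CisInt F a b l -> CisInt G a b l.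
Proof. intros E H. apply (is_RInt_ext (V := C_R_NormedModule) F G a b l E H). Qed.

Lemma CisInt_fst (F : R -> C) a b l : CisInt F a b l -> is_RInt (fun t => Re (F t)) a b (Re l).
Proof. intros H. exact (is_RInt_fct_extend_fst (U := R_NormedModule) (V := R_NormedModule) F a b l H). Qed.

Lemma CisInt_snd (F : R -> C) a b l : CisInt F a b l -> is_RInt (fun t => Im (F t)) a b (Im l).
Proof. intros H. exact (is_RInt_fct_extend_snd (U := R_NormedModule) (V := R_NormedModule) F a b l H). Qed.

Lemma CisInt_pair (F : R -> C) a b l1 l2 : is_RInt (fun t => Re (F t)) a b l1 ->
  is_RInt (fun t => Im (F t)) a b l2 -> CisInt F a b (l1, l2).
Proof.
  intros H1 H2.
  exact (is_RInt_fct_extend_pair (U := R_NormedModule) (V := R_NormedModule) F a b l1 l2 H1 H2).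
Qed.

Lemma CisInt_scal (c : C) (F : R -> C) a b l : CisInt F a b l -> CisInt (fun t => c * F t)%C a b (c * l)%C.
Proof.
  intros H. pose proof (CisInt_fst _ _ _ _ H) as H1. pose proof (CisInt_snd _ _ _ _ H) as H2.
  destruct c as [c1 c2]. destruct l as [l1 l2]. simpl in H1, H2.
  unfold Cmult; simpl. apply CisInt_pair; simpl.
  - replace (c1 * l1 - c2 * l2) with (minus (scal c1 l1) (scal c2 l2))
    by (unfold minus, plus, opp, scal; simpl; unfold mult; simpl; ring).
    apply (is_RInt_ext (fun t => minus (scal c1 (Re (F t))) (scal c2 (Im (F t))))).
    { intros. unfold minus, plus, opp, scal; simpl; unfold mult; simpl. destruct (F x); simpl. ring. }
    apply (is_RInt_minus (V := R_NormedModule)); apply (is_RInt_scal (V := R_NormedModule)); auto.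
  - replace (c1 * l2 + c2 * l1) with (plus (scal c1 l2) (scal c2 l1))
    by (unfold minus, plus, opp, scal; simpl; unfold mult; simpl; ring).
    apply (is_RInt_ext (fun t => plus (scal c1 (Im (F t))) (scal c2 (Re (F t))))).
    { intros. unfold minus, plus, opp, scal; simpl; unfold mult; simpl. destruct (F x); simpl. ring. }
    apply (is_RInt_plus (V := R_NormedModule)); apply (is_RInt_scal (V := R_NormedModule)); auto.
Qed.

Lemma CInt_scal (c : C) (F : R -> C) a b : CexInt F a b -> CInt (fun t => c * F t)%C a b = (c * CInt F a b)%C.
Proof. intros H. apply CInt_unique. apply CisInt_scal. apply CisInt_RInt. auto. Qed.

Lemma CisInt_RtoC_mul (phi : R -> R) (c : C) a b I : is_RInt phi a b I ->
  CisInt (fun t => RtoC (phi t) * c)%C a b (RtoC I * c)%C.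
Proof.
  intros H. destruct c as [c1 c2]. unfold RtoC, Cmult; simpl. apply CisInt_pair; simpl.
  - apply (is_RInt_ext (fun t => scal c1 (phi t))). { intros. unfold scal; simpl; unfold mult; simpl. ring. }
    replace (I * c1 - 0 * c2) with (scal c1 I) by (unfold scal; simpl; unfold mult; simpl; ring).
    apply (is_RInt_scal (V := R_NormedModule)); auto.
  - apply (is_RInt_ext (fun t => scal c2 (phi t))). { intros. unfold scal; simpl; unfold mult; simpl. ring. }
    replace (I * c2 + 0 * c1) with (scal c2 I) by (unfold scal; simpl; unfold mult; simpl; ring).
    apply (is_RInt_scal (V := R_NormedModule)); auto.
Qed.

Lemma CisInt_const (c : C) a b : CisInt (fun _ => c) a b (RtoC (b - a) * c)%C.
Proof.
  apply (CisInt_ext (fun t => RtoC 1 * c)%C). { intros. ring. }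
  apply CisInt_RtoC_mul.
  assert (Hc := is_RInt_const (V := R_NormedModule) a b 1).
  assert (Hc2 : is_RInt (fun _ => 1) a b ((b - a) * 1)) by exact Hc.
  rewrite Rmult_1_r in Hc2. exact Hc2.
Qed.

Lemma is_RInt_id_0_1 : is_RInt (fun t => t) 0 1 (1/2).
Proof.
  assert (H := is_RInt_derive (V := R_CompleteNormedModule) (fun t => t * t / 2) (fun t => t) 0 1).
  replace (1/2) with (minus (1 * 1 / 2) (0 * 0 / 2)) by (unfold minus, plus, opp; simpl; field).
  apply H.
  - intros x _. auto_derive; auto. field.
  - intros x _. apply continuous_id.
Qed.

Lemma CisInt_id_mul_0_1 (c : C) : CisInt (fun t => RtoC t * c)%C 0 1 (c / 2)%C.
Proof.
  replace (c / 2)%C with (RtoC (1/2) * c)%C.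
  2:{ unfold Cdiv. rewrite Cmult_comm. f_equal. unfold RtoC, Cinv; simpl. f_equal; field. }
  apply (CisInt_RtoC_mul (fun t => t)). apply is_RInt_id_0_1.
Qed.

Lemma CInt_bound (F : R -> C) a b M : a <= b -> CexInt F a b -> (forall t, a <= t <= b -> Cmod (F t) <= M) ->
  Cmod (CInt F a b) <= (b - a) * M.
Proof.
  intros Hab Hex HM. rewrite <- norm_C_R_Cmod.
  apply (norm_RInt_le_const (V := C_R_NormedModule) F a b); auto.
  - intros. rewrite norm_C_R_Cmod. auto.
  - apply CisInt_RInt; auto.
Qed.

Lemma CisInt_derive (F dF : R -> C) a b : a <= b -> (forall t, a <= t <= b -> rder F t (dF t)) ->
  (forall t, a <= t <= b -> rcont dF t) ->
  CisInt dF a b (F b - F a)%C.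
Proof.
  intros Hab Hd Hc.
  apply (is_RInt_derive (V := C_R_CompleteNormedModule) F dF a b).
  - intros x Hx. rewrite Rmin_left, Rmax_right in Hx by lra. apply is_derive_of_rder. auto.
  - intros x Hx. rewrite Rmin_left, Rmax_right in Hx by lra. apply continuous_of_rcont. auto.
Qed.

Lemma CInt_Re (F : R -> C) a b : CexInt F a b -> Re (CInt F a b) = RInt (fun t => Re (F t)) a b.
Proof. intros H. symmetry. apply is_RInt_unique. apply CisInt_fst. apply CisInt_RInt. auto. Qed.

Lemma rcont_bounded (phi : R -> C) a b : a <= b -> (forall t, a <= t <= b -> rcont phi t) ->
  exists M, 0 <= M /\ forall t, a <= t <= b -> Cmod (phi t) <= M.
Proof.
  intros Hab H.
  destruct (continuity_ab_maj (fun t => Cmod (phi t)) a b Hab) as [x [Hx _]].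
  { intros c Hc. apply continuity_pt_filterlim. apply (filterlim_locally (F := locally c)).
    intros [e He]. destruct (H c Hc e He) as [d [Hd P]]. exists (mkposreal d Hd).
    intros y Hy. apply ballR in Hy. simpl. apply ballR.
    eapply Rle_lt_trans; [apply Rabs_Cmod_sub_le|]. apply P. auto. }
  exists (Cmod (phi x)). split; [apply Cmod_ge_0|]. auto.
Qed.

Lemma const_of_zero_derive (phi : R -> R) : (forall s, 0 <= s <= 1 -> is_derive phi s 0) -> phi 1 = phi 0.
Proof.
  intros H.
  assert (H1 := is_RInt_derive (V := R_CompleteNormedModule) phi (fun _ => 0) 0 1).
  assert (H2 : is_RInt (fun _ : R => 0) 0 1 (minus (phi 1) (phi 0))).
  { apply H1. - intros x Hx. rewrite Rmin_left, Rmax_right in Hx by lra. apply H; auto.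
    - intros. apply continuous_const. }
  assert (H3 := is_RInt_const (V := R_NormedModule) 0 1 0).
  assert (E := is_RInt_unique _ _ _ _ H2). assert (E2 := is_RInt_unique _ _ _ _ H3).
  rewrite E in E2. unfold minus, plus, opp, scal in E2; simpl in E2; unfold mult in E2; simpl in E2. lra.
Qed.


(** * Integrals along segments *)

Definition along_seg (g : C -> C) (a b : C) (t : R) : C := g (a + RtoC t * (b - a))%C.

Definition seg_cont (g : C -> C) (a b : C) := forall t, 0 <= t <= 1 -> ccont g (a + RtoC t * (b - a))%C.

Lemma seg_integral_eq g a b : seg_integral g a b = ((b - a) * CInt (along_seg g a b) 0 1)%C.
Proof. reflexivity. Qed.

Lemma along_seg_rcont g a b t : seg_cont g a b -> 0 <= t <= 1 -> rcont (along_seg g a b) t.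
Proof.
  intros H Ht. unfold along_seg. apply (rcont_comp g (fun t => a + RtoC t * (b - a))%C).
  apply rcont_affine. apply H; auto.
Qed.

Lemma along_seg_ex_RInt g a b u v : seg_cont g a b -> 0 <= u <= v -> v <= 1 -> CexInt (along_seg g a b) u v.
Proof. intros H Hu Hv. apply CexInt_of_rcont; [lra|]. intros t Ht. apply along_seg_rcont; auto. lra. Qed.

Lemma CisInt_comp_lin (G : R -> C) u v a b l : CisInt G (u * a + v) (u * b + v) l ->
  CisInt (fun y => RtoC u * G (u * y + v)%R)%C a b l.
Proof.
  intros H. apply (is_RInt_comp_lin (V := C_R_NormedModule)) in H.
  eapply CisInt_ext; [|exact H]. intros. simpl. rewrite scalCR. reflexivity.
Qed.

Lemma CisInt_swap (G : R -> C) a b l : CisInt G a b l -> CisInt G b a (- l)%C.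
Proof. intros H. apply (is_RInt_swap (V := C_R_NormedModule)). exact H. Qed.

Lemma seg_integral_swap g a b : seg_cont g a b -> seg_integral g b a = (- seg_integral g a b)%C.
Proof.
  intros H. rewrite !seg_integral_eq.
  set (I := (CInt (along_seg g a b) 0 1 : C)).
  assert (HI : CisInt (along_seg g a b) 0 1 I) by (apply CisInt_RInt; apply along_seg_ex_RInt; auto; lra).
  assert (H2 : CisInt (along_seg g b a) 0 1 I).
  { apply CisInt_swap in HI.
    assert (H3 : CisInt (along_seg g a b) (-1 * 0 + 1) (-1 * 1 + 1) (- I)%C).
    { replace (-1 * 0 + 1) with 1 by ring. replace (-1 * 1 + 1) with 0 by ring. exact HI. }
    apply CisInt_comp_lin in H3. apply (CisInt_scal (RtoC (-1))) in H3.
    replace (RtoC (-1) * - I)%C with I in H3 by (rewrite RtoC_m1; ring).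
    eapply CisInt_ext; [|exact H3]. intros t _. unfold along_seg.
    replace (RtoC (-1) * (RtoC (-1) * g (a + RtoC (-1 * t + 1) * (b - a))))%C
      with (g (a + RtoC (-1 * t + 1) * (b - a)))%C
      by (rewrite RtoC_m1; ring).
    f_equal. rewrite RtoC_plus, RtoC_mult, RtoC_m1. ring. }
  rewrite (CInt_unique _ _ _ _ H2). ring.
Qed.

Lemma seg_integral_split_mid g a b : seg_cont g a b ->
  seg_integral g a b = (seg_integral g a ((a + b) / 2) + seg_integral g ((a + b) / 2) b)%C.
Proof.
  intros H. rewrite !seg_integral_eq.
  set (I1 := (CInt (along_seg g a b) 0 (1/2) : C)). set (I2 := (CInt (along_seg g a b) (1/2) 1 : C)).
  assert (H1 : CisInt (along_seg g a b) 0 (1/2) I1)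
    by (apply CisInt_RInt; apply along_seg_ex_RInt; auto; lra).
  assert (H2 : CisInt (along_seg g a b) (1/2) 1 I2)
    by (apply CisInt_RInt; apply along_seg_ex_RInt; auto; lra).
  assert (H12 := is_RInt_Chasles (V := C_R_NormedModule) _ _ _ _ _ _ H1 H2).
  rewrite (CInt_unique _ _ _ _ H12).
  assert (K1 : CisInt (along_seg g a ((a + b) / 2)) 0 1 (2 * I1)%C).
  { assert (H3 : CisInt (along_seg g a b) (1/2 * 0 + 0) (1/2 * 1 + 0) I1).
    { replace (1/2 * 0 + 0) with 0 by ring. replace (1/2 * 1 + 0) with (1/2) by field. exact H1. }
    apply CisInt_comp_lin in H3. apply (CisInt_scal (RtoC 2)) in H3.
    eapply CisInt_ext; [|exact H3]. intros t _. unfold along_seg.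
    rewrite half_scal. f_equal. destruct a as [a1 a2], b as [b1 b2]; apply C_ext; simpl; field. }
  assert (K2 : CisInt (along_seg g ((a + b) / 2) b) 0 1 (2 * I2)%C).
  { assert (H3 : CisInt (along_seg g a b) (1/2 * 0 + 1/2) (1/2 * 1 + 1/2) I2).
    { replace (1/2 * 0 + 1/2) with (1/2) by ring. replace (1/2 * 1 + 1/2) with 1 by field. exact H2. }
    apply CisInt_comp_lin in H3. apply (CisInt_scal (RtoC 2)) in H3.
    eapply CisInt_ext; [|exact H3]. intros t _. unfold along_seg.
    rewrite half_scal. f_equal. destruct a as [a1 a2], b as [b1 b2]; apply C_ext; simpl; field. }
  rewrite (CInt_unique _ _ _ _ K1), (CInt_unique _ _ _ _ K2).
  change (plus I1 I2) with (I1 + I2)%C. field.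
Qed.

Definition cont_disk (g : C -> C) := forall z, Cmod z < 1 -> ccont g z.

Lemma Cmod_convex_le (a b : C) t : 0 <= t <= 1 ->
  Cmod (a + RtoC t * (b - a))%C <= (1 - t) * Cmod a + t * Cmod b.
Proof.
  intros Ht. replace (a + RtoC t * (b - a))%C with (RtoC (1 - t) * a + RtoC t * b)%C
    by (rewrite RtoC_minus; ring).
  eapply Rle_trans; [apply Cmod_triangle|]. rewrite !Cmod_RtoC_mult.
  rewrite !Rabs_pos_eq by lra. lra.
Qed.

Lemma Cmod_convex_lt1 (a b : C) t : 0 <= t <= 1 -> Cmod a < 1 -> Cmod b < 1 ->
  Cmod (a + RtoC t * (b - a))%C < 1.
Proof.
  intros Ht Ha Hb. pose proof (Cmod_convex_le a b t Ht).
  set (m := Rmax (Cmod a) (Cmod b)). assert (m < 1) by (unfold m; apply Rmax_lub_lt; auto).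
  assert (0 <= (1 - t) * (m - Cmod a))
    by (apply Rmult_le_pos; unfold m; [lra|pose proof (Rmax_l (Cmod a) (Cmod b)); lra]).
  assert (0 <= t * (m - Cmod b))
    by (apply Rmult_le_pos; unfold m; [lra|pose proof (Rmax_r (Cmod a) (Cmod b)); lra]).
  nra.
Qed.

Lemma seg_cont_disk g a b : cont_disk g -> Cmod a < 1 -> Cmod b < 1 -> seg_cont g a b.
Proof. intros H Ha Hb t Ht. apply H. apply Cmod_convex_lt1; auto. Qed.

Lemma seg_integral_minus g1 g2 a b : seg_cont g1 a b -> seg_cont g2 a b ->
  seg_integral (fun z => g1 z - g2 z)%C a b = (seg_integral g1 a b - seg_integral g2 a b)%C.
Proof.
  intros H1 H2. rewrite !seg_integral_eq.
  assert (K1 := CisInt_RInt _ _ _ (along_seg_ex_RInt g1 a b 0 1 H1 ltac:(lra) ltac:(lra))).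
  assert (K2 := CisInt_RInt _ _ _ (along_seg_ex_RInt g2 a b 0 1 H2 ltac:(lra) ltac:(lra))).
  assert (K := CisInt_minus _ _ _ _ _ _ K1 K2).
  rewrite (CInt_unique (along_seg (fun z => g1 z - g2 z)%C a b) 0 1 _ K). ring.
Qed.

Lemma seg_integral_lincomb g1 g2 (c1 c2 a b : C) : seg_cont g1 a b -> seg_cont g2 a b ->
  seg_integral (fun z => c1 * g1 z + c2 * g2 z)%C a b = (c1 * seg_integral g1 a b + c2 * seg_integral g2 a b)%C.
Proof.
  intros H1 H2. rewrite !seg_integral_eq.
  assert (K1 := CisInt_scal c1 _ _ _ _ (CisInt_RInt _ _ _ (along_seg_ex_RInt g1 a b 0 1 H1 ltac:(lra)
      ltac:(lra)))).
  assert (K2 := CisInt_scal c2 _ _ _ _ (CisInt_RInt _ _ _ (along_seg_ex_RInt g2 a b 0 1 H2 ltac:(lra)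
      ltac:(lra)))).
  rewrite (CInt_unique (along_seg (fun z => c1 * g1 z + c2 * g2 z)%C a b) 0 1 _ (CisInt_plus _ _ _ _ _ _ K1 K2)).
  ring.
Qed.

Lemma seg_integral_affine (al be : C) a b :
  seg_integral (fun z => al + be * z)%C a b = (al * (b - a) + be * (b * b - a * a) / 2)%C.
Proof.
  rewrite seg_integral_eq.
  assert (K : CisInt (along_seg (fun z => al + be * z)%C a b) 0 1 (RtoC (1 - 0) * (al + be * a)
      + (be * (b - a)) / 2)%C).
  { apply (CisInt_ext (fun t => (al + be * a) + RtoC t * (be * (b - a)))%C).
    { intros t _. unfold along_seg. ring. }
    apply CisInt_plus. apply CisInt_const. apply CisInt_id_mul_0_1. }
  rewrite (CInt_unique _ _ _ _ K). replace (RtoC (1 - 0)) with (RtoC 1) by (f_equal; ring). field.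
Qed.

Lemma seg_integral_const (c a b : C) : seg_integral (fun _ => c) a b = (c * (b - a))%C.
Proof.
  assert (E := seg_integral_affine c 0 a b).
  replace (fun z : C => (c + 0 * z)%C) with (fun _ : C => c) in E.
  2:{ apply functional_extensionality; intros; ring. }
  rewrite E. field.
Qed.

Lemma seg_integral_sub_const g a b c : seg_cont g a b ->
  seg_integral (fun w => g w - c)%C a b = (seg_integral g a b - c * (b - a))%C.
Proof.
  intros H. rewrite seg_integral_minus; auto. rewrite seg_integral_const. reflexivity.
  intros t _. apply ccont_const.
Qed.

Lemma seg_integral_bound g a b M : seg_cont g a b ->
  (forall t, 0 <= t <= 1 -> Cmod (g (a + RtoC t * (b - a)))%C <= M) ->
  Cmod (seg_integral g a b) <= Cmod (b - a) * M.
Proof.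
  intros H HM. rewrite seg_integral_eq, Cmod_mult. apply Rmult_le_compat_l; [apply Cmod_ge_0|].
  replace M with ((1 - 0) * M) by ring. apply CInt_bound; [lra| apply along_seg_ex_RInt; auto; lra|].
  intros t Ht. apply HM. auto.
Qed.


(** * Goursat's theorem and primitives *)

Definition holo_disk (g : C -> C) := forall z, Cmod z < 1 -> exists l, cder g z l.

Lemma cont_disk_of_holo_disk g : holo_disk g -> cont_disk g.
Proof. intros H z Hz. destruct (H z Hz) as [l Hl]. eapply ccont_of_cder; eauto. Qed.

Lemma pow_half_lt (y : R) : 0 < y -> exists n : nat, (/2) ^ n < y.
Proof.
  intros Hy. destruct (pow_lt_1_zero (/2) ltac:(rewrite Rabs_pos_eq; lra) y Hy) as [N HN].
  exists N. specialize (HN N (Nat.le_refl N)). rewrite Rabs_pos_eq in HN; auto.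
  apply pow_le. lra.
Qed.

Lemma pow_half_pos n : 0 < (/2) ^ n.
Proof. apply pow_lt. lra. Qed.

Lemma geometric_cauchy_limit (u : nat -> R) (B : R) : 0 <= B ->
  (forall n k, Rabs (u (n + k)%nat - u n) <= B * (/2) ^ n) ->
  exists l, forall n, Rabs (l - u n) <= B * (/2) ^ n.
Proof.
  intros HB H.
  assert (Hc : Cauchy_crit u).
  { intros eps He. destruct (pow_half_lt (eps / (2 * (B + 1)))) as [N HN].
    { apply Rdiv_lt_0_compat; lra. }
    exists N. intros n m Hn Hm. unfold Rdist.
    assert (A1 : Rabs (u n - u N) <= B * (/2) ^ N).
    { replace n with (N + (n - N))%nat by lia. apply H. }
    assert (A2 : Rabs (u m - u N) <= B * (/2) ^ N).
    { replace m with (N + (m - N))%nat by lia. apply H. }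
    replace (u n - u m) with ((u n - u N) - (u m - u N)) by ring.
    eapply Rle_lt_trans; [apply Rabs_triang|]. rewrite Rabs_Ropp.
    assert (B * (/2) ^ N < (B + 1) * (eps / (2 * (B + 1)))).
    { pose proof (pow_half_pos N). apply Rle_lt_trans with ((B + 1) * (/2) ^ N); [nra|].
      apply Rmult_lt_compat_l; lra. }
    replace ((B + 1) * (eps / (2 * (B + 1)))) with (eps / 2) in H0 by (field; lra). lra. }
  destruct (Rcomplete.R_complete u Hc) as [l Hl]. exists l. intros n.
  destruct (Rle_lt_dec (Rabs (l - u n)) (B * (/2) ^ n)) as [|Hlt]; auto. exfalso.
  destruct (Hl (Rabs (l - u n) - B * (/2) ^ n) ltac:(lra)) as [N HN].
  specialize (HN (n + N)%nat ltac:(lia)). unfold Rdist in HN.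
  specialize (H n N).
  pose proof (Rabs_triang (l - u (n + N)%nat) (u (n + N)%nat - u n)).
  replace (l - u (n + N)%nat + (u (n + N)%nat - u n)) with (l - u n) in H0 by ring.
  rewrite Rabs_minus_sym in HN. lra.
Qed.

Definition tri_integral g (a b c : C) : C := (seg_integral g a b + seg_integral g b c + seg_integral g c a)%C.

Definition mid (a b : C) : C := ((a + b) / 2)%C.

Lemma mid_eq a b : mid a b = (a + RtoC (1/2) * (b - a))%C.
Proof. unfold mid. destruct a, b; apply C_ext; simpl; field. Qed.

Lemma mid_disk a b : Cmod a < 1 -> Cmod b < 1 -> Cmod (mid a b) < 1.
Proof. intros. rewrite mid_eq. apply Cmod_convex_lt1; auto. lra. Qed.

Lemma mid_le a b r : Cmod a <= r -> Cmod b <= r -> Cmod (mid a b) <= r.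
Proof. intros. rewrite mid_eq. eapply Rle_trans; [apply Cmod_convex_le; lra|]. lra. Qed.

Lemma tri_integral_subdivide g a b c : cont_disk g -> Cmod a < 1 -> Cmod b < 1 -> Cmod c < 1 ->
  tri_integral g a b c = (tri_integral g a (mid a b) (mid c a) + tri_integral g (mid a b) b (mid b c)
               + tri_integral g (mid c a) (mid b c) c + tri_integral g (mid a b) (mid b c) (mid c a))%C.
Proof.
  intros H Ha Hb Hc.
  assert (Hab := mid_disk a b Ha Hb). assert (Hbc := mid_disk b c Hb Hc). assert (Hca := mid_disk c a Hc Ha).
  unfold tri_integral.
  rewrite (seg_integral_split_mid g a b) by (apply seg_cont_disk; auto).
  rewrite (seg_integral_split_mid g b c) by (apply seg_cont_disk; auto).
  rewrite (seg_integral_split_mid g c a) by (apply seg_cont_disk; auto).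
  rewrite (seg_integral_swap g (mid a b) (mid c a)) by (apply seg_cont_disk; auto).
  rewrite (seg_integral_swap g (mid a b) (mid b c)) by (apply seg_cont_disk; auto).
  rewrite (seg_integral_swap g (mid c a) (mid b c)) by (apply seg_cont_disk; auto).
  unfold mid. ring.
Qed.

Definition triangle := (C * C * C)%type.

Definition triangle_integral g (x : triangle) : C := let '(a, b, c) := x in tri_integral g a b c.

Definition perim (x : triangle) : R := let '(a, b, c) := x in Cmod (b - a) + Cmod (c - b) + Cmod (a - c).

Definition tri_in_ball (r : R) (x : triangle) : Prop :=
  let '(a, b, c) := x in Cmod a <= r /\ Cmod b <= r /\ Cmod c <= r.

Definition tri_vertex (x : triangle) : C := let '(a, _, _) := x in a.

Definition pick_larger g (x y : triangle) : triangle :=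
  if Rle_dec (Cmod (triangle_integral g x)) (Cmod (triangle_integral g y)) then y else x.

Lemma pick_larger_ge g x y :
  Cmod (triangle_integral g x) <= Cmod (triangle_integral g (pick_larger g x y)) /\
  Cmod (triangle_integral g y) <= Cmod (triangle_integral g (pick_larger g x y)).
Proof. unfold pick_larger. destruct (Rle_dec _ _); lra. Qed.

Lemma pick_larger_in g x y (P : triangle -> Prop) : P x -> P y -> P (pick_larger g x y).
Proof. unfold pick_larger. destruct (Rle_dec _ _); auto. Qed.

Definition subdivide (x : triangle) : triangle * triangle * triangle * triangle :=
  let '(a, b, c) := x in
  ((a, mid a b, mid c a), (mid a b, b, mid b c), (mid c a, mid b c, c), (mid a b, mid b c, mid c a)).

Definition goursat_step g (x : triangle) : triangle :=
  let '(t1, t2, t3, t4) := subdivide x in pick_larger g (pick_larger g t1 t2) (pick_larger g t3 t4).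

Lemma goursat_step_in g x (P : triangle -> Prop) :
  (let '(t1, t2, t3, t4) := subdivide x in P t1 /\ P t2 /\ P t3 /\ P t4) -> P (goursat_step g x).
Proof.
  unfold goursat_step. destruct (subdivide x) as [[[t1 t2] t3] t4]. intros [A [B [C' D]]].
  repeat apply pick_larger_in; auto.
Qed.

Ltac halfeq := unfold mid; rewrite RtoC_half; field; apply RtoC_2_neq0.

Lemma goursat_step_integral g (x : triangle) r : cont_disk g -> r < 1 -> tri_in_ball r x ->
  Cmod (triangle_integral g x) <= 4 * Cmod (triangle_integral g (goursat_step g x)).
Proof.
  destruct x as [[a b] c]. simpl tri_in_ball. intros Hd Hr [Ha [Hb Hc]].
  unfold goursat_step. cbn [subdivide].
  set (t1 := (a, mid a b, mid c a)). set (t2 := (mid a b, b, mid b c)).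
  set (t3 := (mid c a, mid b c, c)). set (t4 := (mid a b, mid b c, mid c a)).
  destruct (pick_larger_ge g t1 t2) as [A1 A2]. destruct (pick_larger_ge g t3 t4) as [A3 A4].
  destruct (pick_larger_ge g (pick_larger g t1 t2) (pick_larger g t3 t4)) as [B1 B2].
  assert (E : triangle_integral g (a, b, c) = (triangle_integral g t1 + triangle_integral g t2 + triangle_integral g t3 + triangle_integral g t4)%C).
  { simpl. apply tri_integral_subdivide; auto; lra. }
  rewrite E. eapply Rle_trans; [apply Cmod_triangle|]. eapply Rle_trans;
  [apply Rplus_le_compat_r; apply Cmod_triangle3|].
  lra.
Qed.

Lemma goursat_step_props g (x : triangle) r : tri_in_ball r x ->
  perim (goursat_step g x) = perim x / 2 /\ tri_in_ball r (goursat_step g x) /\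
  Cmod (tri_vertex (goursat_step g x) - tri_vertex x) <= perim x.
Proof.
  destruct x as [[a b] c]. simpl tri_in_ball. intros [Ha [Hb Hc]].
  apply (goursat_step_in g (a, b, c)
      (fun y => perim y = perim (a, b, c) / 2 /\ tri_in_ball r y /\ Cmod (tri_vertex y - tri_vertex (a, b, c)) <= perim (a, b, c))).
  cbn [subdivide]. unfold perim, tri_in_ball, tri_vertex.
  pose proof (Cmod_ge_0 (b - a)). pose proof (Cmod_ge_0 (c - b)). pose proof (Cmod_ge_0 (a - c)).
  assert (Mab := mid_le a b r Ha Hb). assert (Mbc := mid_le b c r Hb Hc). assert (Mca := mid_le c a r Hc Ha).
  assert (E1 : (mid a b - a)%C = (RtoC (1/2) * (b - a))%C) by halfeq.
  assert (E2 : (mid c a - mid a b)%C = (RtoC (1/2) * (c - b))%C) by halfeq.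
  assert (E3 : (a - mid c a)%C = (RtoC (1/2) * (a - c))%C) by halfeq.
  assert (E4 : (b - mid a b)%C = (RtoC (1/2) * (b - a))%C) by halfeq.
  assert (E5 : (mid b c - b)%C = (RtoC (1/2) * (c - b))%C) by halfeq.
  assert (E6 : (mid a b - mid b c)%C = (RtoC (1/2) * (a - c))%C) by halfeq.
  assert (E7 : (mid b c - mid c a)%C = (RtoC (1/2) * (b - a))%C) by halfeq.
  assert (E8 : (c - mid b c)%C = (RtoC (1/2) * (c - b))%C) by halfeq.
  assert (E9 : (mid c a - c)%C = (RtoC (1/2) * (a - c))%C) by halfeq.
  assert (E10 : (mid b c - mid a b)%C = (RtoC (1/2) * (c - a))%C) by halfeq.
  assert (E11 : (mid c a - mid b c)%C = (RtoC (1/2) * (a - b))%C) by halfeq.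
  assert (E12 : (mid a b - mid c a)%C = (RtoC (1/2) * (b - c))%C) by halfeq.
  assert (E13 : (mid c a - a)%C = (RtoC (1/2) * (c - a))%C) by halfeq.
  assert (E0 : (a - a)%C = RtoC 0) by ring.
  assert (S1 : Cmod (c - a) = Cmod (a - c)) by apply Cmod_sub_sym.
  assert (S2 : Cmod (a - b) = Cmod (b - a)) by apply Cmod_sub_sym.
  assert (S3 : Cmod (b - c) = Cmod (c - b)) by apply Cmod_sub_sym.
  rewrite E1, E2, E3, E4, E5, E6, E7, E8, E9, E10, E11, E12, E13, E0, !Cmod_half, Cmod_0, S1, S2, S3.
  repeat split; try lra.
Qed.

Definition goursat_seq g (x0 : triangle) (n : nat) : triangle := Nat.iter n (goursat_step g) x0.

Lemma goursat_seq_S g x0 n : goursat_seq g x0 (S n) = goursat_step g (goursat_seq g x0 n).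
Proof. reflexivity. Qed.

Lemma goursat_seq_props g x0 r : tri_in_ball r x0 -> forall n,
  tri_in_ball r (goursat_seq g x0 n) /\ perim (goursat_seq g x0 n) = perim x0 * (/2) ^ n.
Proof.
  intros H n. induction n as [|n [IH1 IH2]].
  - simpl. split; auto. ring.
  - rewrite goursat_seq_S. destruct (goursat_step_props g _ r IH1) as [A [B _]]. split; auto.
    rewrite A, IH2. simpl. field.
Qed.

Lemma goursat_seq_vertex_step g x0 r n : tri_in_ball r x0 ->
  Cmod (tri_vertex (goursat_seq g x0 (S n)) - tri_vertex (goursat_seq g x0 n)) <= perim x0 * (/2) ^ n.
Proof.
  intros H. destruct (goursat_seq_props g x0 r H n) as [A B]. rewrite goursat_seq_S.
  destruct (goursat_step_props g _ r A) as [_ [_ C']]. rewrite <- B. auto.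
Qed.

Lemma perim_nonneg x : 0 <= perim x.
Proof.
  destruct x as [[a b] c]. simpl. pose proof (Cmod_ge_0 (b - a)). pose proof (Cmod_ge_0 (c - b)).
  pose proof (Cmod_ge_0 (a - c)). lra.
Qed.

Lemma goursat_seq_vertex_dist g x0 r n k : tri_in_ball r x0 ->
  Cmod (tri_vertex (goursat_seq g x0 (n + k))
      - tri_vertex (goursat_seq g x0 n)) <= 2 * perim x0 * ((/2) ^ n - (/2) ^ (n + k)).
Proof.
  intros H. induction k as [|k IH].
  - rewrite Nat.add_0_r.
  replace (tri_vertex (goursat_seq g x0 n) - tri_vertex (goursat_seq g x0 n))%C with (RtoC 0) by ring.
    rewrite Cmod_0. lra.
  - replace (n + S k)%nat with (S (n + k)) by lia.
    replace (tri_vertex (goursat_seq g x0 (S (n + k))) - tri_vertex (goursat_seq g x0 n))%C with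
      ((tri_vertex (goursat_seq g x0 (S (n + k))) - tri_vertex (goursat_seq g x0 (n + k)))
          + (tri_vertex (goursat_seq g x0 (n + k)) - tri_vertex (goursat_seq g x0 n)))%C by ring.
    eapply Rle_trans; [apply Cmod_triangle|]. pose proof (goursat_seq_vertex_step g x0 r (n + k) H).
    simpl ((/2) ^ S (n + k)). lra.
Qed.

Lemma goursat_seq_integral g x0 r : cont_disk g -> r < 1 -> tri_in_ball r x0 -> forall n,
  Cmod (triangle_integral g x0) <= 4 ^ n * Cmod (triangle_integral g (goursat_seq g x0 n)).
Proof.
  intros Hd Hr H n. induction n as [|n IH].
  - simpl. lra.
  - rewrite goursat_seq_S. destruct (goursat_seq_props g x0 r H n) as [A _].
    pose proof (goursat_step_integral g _ r Hd Hr A). simpl (4 ^ S n). pose proof (pow_le 4 n ltac:(lra)).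
    nra.
Qed.

Lemma pow4_pow_half_sq n : 4 ^ n * ((/2) ^ n * (/2) ^ n) = 1.
Proof.
  induction n; simpl; [ring|].
  replace (4 * 4 ^ n * (/ 2 * (/ 2) ^ n * (/ 2 * (/ 2) ^ n))) with (4 ^ n * ((/ 2) ^ n * (/ 2) ^ n))
  by field. auto.
Qed.

Definition minus_tangent g (z0 l : C) (z : C) : C := (g z - ((g z0 - l * z0) + l * z))%C.

Lemma cont_disk_minus_tangent g z0 l : cont_disk g -> cont_disk (minus_tangent g z0 l).
Proof.
  intros H z Hz. unfold minus_tangent. apply ccont_minus; auto. apply ccont_plus; [apply ccont_const|].
  apply ccont_mult; [apply ccont_const|apply ccont_id].
Qed.

(* Affine functions have a primitive, so their integrals over closed triangles vanish. *)
Lemma tri_integral_minus_tangent g z0 l a b c : cont_disk g -> Cmod a < 1 -> Cmod b < 1 -> Cmod c < 1 ->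
  tri_integral g a b c = tri_integral (minus_tangent g z0 l) a b c.
Proof.
  intros H Ha Hb Hc. unfold tri_integral, minus_tangent.
  assert (Ha2 : cont_disk (fun z => (g z0 - l * z0) + l * z)%C).
  { intros z _. apply ccont_plus; [apply ccont_const|]. apply ccont_mult;
      [apply ccont_const|apply ccont_id]. }
  rewrite !seg_integral_minus by (apply seg_cont_disk; auto).
  rewrite !seg_integral_affine. field.
Qed.

Definition side_near (z0 : C) (d K : R) (u v : C) : Prop :=
  forall t, 0 <= t <= 1 -> Cmod (u + RtoC t * (v - u) - z0)%C < d /\ Cmod (u + RtoC t * (v - u) - z0)%C <= K.

Lemma seg_integral_minus_tangent_small g z0 l eps d K u v : cont_disk g -> 0 <= eps ->
  (forall k, Cmod k < d -> Cmod (g (z0 + k)%C - g z0 - k * l)%C <= eps * Cmod k) ->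
  Cmod u < 1 -> Cmod v < 1 -> side_near z0 d K u v ->
  Cmod (seg_integral (minus_tangent g z0 l) u v) <= Cmod (v - u) * (eps * K).
Proof.
  intros Hd He Hder Hu Hv Hs. apply seg_integral_bound.
  - apply seg_cont_disk; auto. apply cont_disk_minus_tangent; auto.
  - intros t Ht. destruct (Hs t Ht) as [A B].
    set (z := (u + RtoC t * (v - u))%C) in *.
    specialize (Hder (z - z0)%C A). replace (z0 + (z - z0))%C with z in Hder by ring.
    unfold minus_tangent.
    replace (g z - (g z0 - l * z0 + l * z))%C with (g z - g z0 - (z - z0) * l)%C by ring.
    eapply Rle_trans; [apply Hder|]. apply Rmult_le_compat_l; auto.
Qed.

Lemma tri_integral_small g z0 l eps d K a b c : cont_disk g -> 0 <= eps ->
  (forall k, Cmod k < d -> Cmod (g (z0 + k)%C - g z0 - k * l)%C <= eps * Cmod k) ->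
  Cmod a < 1 -> Cmod b < 1 -> Cmod c < 1 ->
  side_near z0 d K a b -> side_near z0 d K b c -> side_near z0 d K c a ->
  Cmod (tri_integral g a b c) <= perim (a, b, c) * (eps * K).
Proof.
  intros Hd He Hder Ha Hb Hc S1 S2 S3.
  rewrite (tri_integral_minus_tangent g z0 l a b c Hd Ha Hb Hc). unfold tri_integral. simpl perim.
  eapply Rle_trans; [apply Cmod_triangle3|].
  pose proof (seg_integral_minus_tangent_small g z0 l eps d K a b Hd He Hder Ha Hb S1).
  pose proof (seg_integral_minus_tangent_small g z0 l eps d K b c Hd He Hder Hb Hc S2).
  pose proof (seg_integral_minus_tangent_small g z0 l eps d K c a Hd He Hder Hc Ha S3).
  lra.
Qed.

Lemma Cmod_on_side_le (a u v : C) p t : Cmod (u - a) <= p -> Cmod (v - u) <= p -> 0 <= t <= 1 ->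
  Cmod (u + RtoC t * (v - u) - a)%C <= 2 * p.
Proof.
  intros H1 H2 Ht. replace (u + RtoC t * (v - u) - a)%C with ((u - a) + RtoC t * (v - u))%C by ring.
  eapply Rle_trans; [apply Cmod_triangle|]. rewrite Cmod_RtoC_mult, Rabs_pos_eq by lra.
  pose proof (Cmod_ge_0 (v - u)). nra.
Qed.

Lemma Rle_eps_eq0 (x P : R) : 0 <= x -> (forall eps, 0 < eps -> x <= eps * P) -> x = 0.
Proof.
  intros Hx H. destruct (Req_dec x 0); auto. exfalso.
  assert (Hp : 0 < x) by lra.
  destruct (Rle_lt_dec P 0) as [HP|HP].
  - specialize (H 1 ltac:(lra)). lra.
  - specialize (H (x / (2 * P)) ltac:(apply Rdiv_lt_0_compat; lra)).
    replace (x / (2 * P) * P) with (x / 2) in H by (field; lra). lra.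
Qed.

Lemma goursat_seq_limit g x0 r : tri_in_ball r x0 ->
  exists z0, Cmod z0 <= r /\
    forall n, Cmod (z0 - tri_vertex (goursat_seq g x0 n)) <= 4 * perim x0 * (/2) ^ n.
Proof.
  intros Hv.
  set (P := perim x0). assert (HP : 0 <= P) by apply perim_nonneg.
  set (an := fun n => tri_vertex (goursat_seq g x0 n)).
  destruct (geometric_cauchy_limit (fun n => Re (an n)) (2 * P) ltac:(lra)) as [lx Hlx].
  { intros n k. eapply Rle_trans; [|eapply Rle_trans; [apply (goursat_seq_vertex_dist g x0 r n k Hv)|]].
    - unfold an. rewrite <- Re_minus. apply re_le_Cmod.
    - fold P. pose proof (pow_half_pos (n + k)). nra. }
  destruct (geometric_cauchy_limit (fun n => Im (an n)) (2 * P) ltac:(lra)) as [ly Hly].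
  { intros n k. eapply Rle_trans; [|eapply Rle_trans; [apply (goursat_seq_vertex_dist g x0 r n k Hv)|]].
    - unfold an. rewrite <- Im_minus. apply im_le_Cmod.
    - fold P. pose proof (pow_half_pos (n + k)). nra. }
  set (z0 := (lx, ly) : C).
  assert (Hz0 : forall n, Cmod (z0 - an n) <= 4 * P * (/2) ^ n).
  { intros n. eapply Rle_trans; [apply Cmod_le_Rabs_Re_Im|]. rewrite Re_minus, Im_minus.
    specialize (Hlx n). specialize (Hly n). change (Re z0) with lx. change (Im z0) with ly. lra. }
  exists z0. split; [|exact Hz0].
  destruct (Rle_lt_dec (Cmod z0) r) as [|Hlt]; auto. exfalso.
  destruct (pow_half_lt ((Cmod z0 - r) / (4 * P + 1))) as [n Hn]. { apply Rdiv_lt_0_compat; lra. }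
  destruct (goursat_seq_props g x0 r Hv n) as [Vn _].
  assert (Han : Cmod (an n) <= r)
    by (unfold an; destruct (goursat_seq g x0 n) as [[u v] w]; simpl in *; tauto).
  pose proof (Hz0 n). pose proof (Cmod_triangle (z0 - an n) (an n)).
  replace (z0 - an n + an n)%C with z0 in H0 by ring.
  assert (4 * P * (/2) ^ n < Cmod z0 - r).
  { pose proof (pow_half_pos n). apply Rle_lt_trans with ((4 * P + 1) * (/2) ^ n); [nra|].
    apply (Rmult_lt_compat_l (4 * P + 1)) in Hn; [|lra].
    replace ((4 * P + 1) * ((Cmod z0 - r) / (4 * P + 1))) with (Cmod z0 - r) in Hn by (field; lra). lra. }
  lra.
Qed.

Lemma tri_integral_small_near g z0 l eps d p u v w : cont_disk g -> 0 <= eps ->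
  (forall k, Cmod k < d -> Cmod (g (z0 + k)%C - g z0 - k * l)%C <= eps * Cmod k) ->
  Cmod u < 1 -> Cmod v < 1 -> Cmod w < 1 ->
  perim (u, v, w) = p -> Cmod (z0 - u) <= 4 * p -> 6 * p < d ->
  Cmod (tri_integral g u v w) <= eps * (6 * p * p).
Proof.
  intros Hd He Hder Hu Hv Hw Hp Hz0 Hpd. simpl in Hp.
  pose proof (Cmod_ge_0 (v - u)) as Nuv. pose proof (Cmod_ge_0 (w - v)) as Nvw.
  pose proof (Cmod_ge_0 (u - w)) as Nwu.
  assert (Sb : forall s s', Cmod (s - u) <= p -> Cmod (s' - s) <= p -> side_near z0 d (6 * p) s s').
  { intros s s' H1 H2 t Ht. pose proof (Cmod_on_side_le u s s' p t H1 H2 Ht) as Hs.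
    replace (s + RtoC t * (s' - s) - z0)%C with ((s + RtoC t * (s' - s) - u) + (u - z0))%C by ring.
    pose proof (Cmod_triangle (s + RtoC t * (s' - s) - u) (u - z0)) as Ht'.
    rewrite (Cmod_sub_sym u z0) in Ht'. split; lra. }
  assert (Cuu : Cmod (u - u) <= p) by (replace (u - u)%C with (RtoC 0) by ring; rewrite Cmod_0; lra).
  assert (Cwu : Cmod (w - u) <= p) by (rewrite Cmod_sub_sym; lra).
  eapply Rle_trans.
  { apply (tri_integral_small g z0 l eps d (6 * p) u v w); auto.
    - apply Sb; auto; lra.
    - apply Sb; lra.
    - apply Sb; auto. rewrite Cmod_sub_sym; lra. }
  simpl perim. rewrite Hp. right. ring.
Qed.

(* Goursat: bisecting [n] times keeps a quarter of the integral at each step, while the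
   [n]-th triangle shrinks to a point [z0] where [g] is nearly affine, so
   [|T| <= 4^n * eps * 6 (P/2^n)^2 = 6 eps P^2] for every [eps]. *)
Theorem goursat g a b c : holo_disk g ->
  Cmod a < 1 -> Cmod b < 1 -> Cmod c < 1 -> tri_integral g a b c = RtoC 0.
Proof.
  intros Hder Ha Hb Hc. assert (Hd := cont_disk_of_holo_disk g Hder).
  set (r := Rmax (Cmod a) (Rmax (Cmod b) (Cmod c))).
  assert (Hr : r < 1) by (unfold r; repeat apply Rmax_lub_lt; auto).
  set (x0 := (a, b, c) : triangle).
  assert (Hv : tri_in_ball r x0).
  { unfold x0, tri_in_ball, r. split; [apply Rmax_l|]. split; [eapply Rle_trans;
      [apply Rmax_l|apply Rmax_r]|].
    eapply Rle_trans; [apply Rmax_r|apply Rmax_r]. }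
  set (P := perim x0). assert (HP : 0 <= P) by apply perim_nonneg.
  destruct (goursat_seq_limit g x0 r Hv) as [z0 [Hz0r Hz0]].
  destruct (Hder z0 ltac:(lra)) as [l Hl].
  change (tri_integral g a b c) with (triangle_integral g x0).
  apply Cmod_eq_0. apply (Rle_eps_eq0 _ (6 * P * P)); [apply Cmod_ge_0|].
  intros eps He. destruct (Hl eps He) as [d [Hdpos Hdk]].
  destruct (pow_half_lt (d / (6 * P + 1))) as [n Hn]. { apply Rdiv_lt_0_compat; lra. }
  set (q := (/2) ^ n) in *. assert (Hq : 0 < q) by apply pow_half_pos.
  assert (H6 : 6 * (P * q) < d).
  { apply Rle_lt_trans with ((6 * P + 1) * q); [nra|].
    apply (Rmult_lt_compat_l (6 * P + 1)) in Hn; [|lra].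
    replace ((6 * P + 1) * (d / (6 * P + 1))) with d in Hn by (field; lra). lra. }
  destruct (goursat_seq_props g x0 r Hv n) as [Vn Pn].
  pose proof (goursat_seq_integral g x0 r Hd Hr Hv n) as Tn.
  specialize (Hz0 n). fold P q in Pn, Hz0.
  destruct (goursat_seq g x0 n) as [[u v] w]. simpl in Vn, Tn, Hz0. destruct Vn as [Hu [Hv' Hw]].
  assert (Small := tri_integral_small_near g z0 l eps d (P * q) u v w Hd ltac:(lra) Hdk
                     ltac:(lra) ltac:(lra) ltac:(lra) Pn ltac:(lra) H6).
  pose proof (pow4_pow_half_sq n). fold q in H.
  assert (0 <= 4 ^ n) by (apply pow_le; lra).
  apply Rle_trans with (4 ^ n * (eps * (6 * (P * q) * (P * q)))).
  { eapply Rle_trans; [apply Tn|]. apply Rmult_le_compat_l; auto. }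
  replace (4 ^ n * (eps * (6 * (P * q) * (P * q)))) with (eps * (6 * P * P) * (4 ^ n * (q * q))) by ring.
  rewrite H. lra.
Qed.


Lemma cder_seg_integral g : holo_disk g -> forall z, Cmod z < 1 -> cder (fun w => seg_integral g 0 w) z (g z).
Proof.
  intros Hd z Hz e He. assert (Hc := cont_disk_of_holo_disk g Hd).
  destruct (Hc z Hz e He) as [d1 [Hd1 P1]].
  exists (Rmin d1 ((1 - Cmod z) / 2)). split. { apply Rmin_pos; lra. }
  intros k Hk.
  assert (Hk1 : Cmod k < d1) by (eapply Rlt_le_trans; [apply Hk|apply Rmin_l]).
  assert (Hk2 : Cmod k < (1 - Cmod z) / 2) by (eapply Rlt_le_trans; [apply Hk|apply Rmin_r]).
  assert (Hzk : Cmod (z + k) < 1) by (pose proof (Cmod_triangle z k); lra).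
  assert (H0 : Cmod (RtoC 0) < 1) by (rewrite Cmod_0; lra).
  assert (G := goursat g 0 z (z + k) Hd H0 Hz Hzk). unfold tri_integral in G.
  rewrite (seg_integral_swap g 0 (z + k)) in G by (apply seg_cont_disk; auto).
  assert (E : (seg_integral g 0 (z + k) - seg_integral g 0 z)%C = seg_integral g z (z + k)).
  { replace (seg_integral g z (z + k)) with ((seg_integral g 0 z + seg_integral g z (z + k)
      + - seg_integral g 0 (z + k)) + seg_integral g 0 (z + k) - seg_integral g 0 z)%C by ring.
    rewrite G. ring. }
  rewrite E.
  replace (k * g z)%C with (g z * (z + k - z))%C by ring.
  rewrite <- seg_integral_sub_const by (apply seg_cont_disk; auto).
  rewrite Rmult_comm. replace (Cmod k) with (Cmod (z + k - z)%C) by (f_equal; ring).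
  eapply Rle_trans; [apply seg_integral_bound|apply Rle_refl].
  { intros t Ht. apply ccont_minus; [apply Hc; apply Cmod_convex_lt1; auto|apply ccont_const]. }
  intros t Ht. left. apply P1.
  replace (z + RtoC t * (z + k - z) - z)%C with (RtoC t * k)%C by ring.
  rewrite Cmod_RtoC_mult, Rabs_pos_eq by lra. pose proof (Cmod_ge_0 k). nra.
Qed.


(** * Cauchy's integral formula *)

Definition circle (r t : R) : C := (r * cos t, r * sin t).

Lemma Cmod_circle r t : 0 <= r -> Cmod (circle r t) = r.
Proof.
  intros Hr. unfold circle, Cmod; simpl.
  replace (r * cos t * (r * cos t * 1) + r * sin t * (r * sin t * 1)) with (r * r * ((sin t)² + (cos t)²))
    by (unfold Rsqr; ring).
  rewrite sin2_cos2, Rmult_1_r. apply sqrt_square. auto.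
Qed.

Lemma rder_circle r t : rder (circle r) t (Ci * circle r t)%C.
Proof.
  replace (Ci * circle r t)%C with (- (r * sin t), r * cos t)
    by (unfold circle, Ci; apply C_ext; simpl; ring).
  apply rder_of_derivable_pair.
  - apply is_derive_Reals. auto_derive; auto. ring.
  - apply is_derive_Reals. auto_derive; auto. ring.
Qed.

Lemma rcont_circle r t : rcont (circle r) t.
Proof. eapply rcont_of_rder. apply rder_circle. Qed.

Lemma circle_2PI r : circle r (2 * PI) = circle r 0.
Proof. unfold circle. rewrite cos_2PI, sin_2PI, cos_0, sin_0. reflexivity. Qed.

Lemma circle_neq0 r t : 0 < r -> circle r t <> RtoC 0.
Proof. intros Hr E. apply (f_equal Cmod) in E. rewrite Cmod_circle, Cmod_0 in E; lra. Qed.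

Lemma Cmod_circle_sub_ge r (w : C) t : 0 <= r -> r - Cmod w <= Cmod (circle r t - w).
Proof. intros Hr. pose proof (Cmod_triangle_rev (circle r t) w). rewrite Cmod_circle in H by auto. lra. Qed.

Lemma twoPI_pos : 0 < 2 * PI.
Proof. pose proof PI_RGT_0. lra. Qed.

Lemma rder_circle_sub r (w : C) t : rder (fun t => circle r t - w)%C t (Ci * circle r t + 0)%C.
Proof. apply rder_plus; [apply rder_circle|]. apply rder_const. Qed.

Lemma CisInt_circle r : CisInt (circle r) 0 (2 * PI) (RtoC 0).
Proof.
  assert (H : CisInt (fun t => Ci * circle r t)%C 0 (2 * PI) (circle r (2 * PI) - circle r 0)%C).
  { apply (CisInt_derive (circle r)); [pose proof twoPI_pos; lra| |].
    - intros. apply rder_circle.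
    - intros. apply rcont_mult; [apply rcont_const|apply rcont_circle]. }
  rewrite circle_2PI in H. apply (CisInt_scal (- Ci)%C) in H.
  replace (- Ci * (circle r 0 - circle r 0))%C with (RtoC 0) in H by ring.
  eapply CisInt_ext; [|exact H]. intros t _. cbv beta.
  replace (- Ci * (Ci * circle r t))%C with (- (Ci * Ci) * circle r t)%C by ring.
  rewrite Ci_mul_Ci. ring.
Qed.

Definition rcont2 (D : R -> R -> C) (s0 t0 : R) : Prop :=
  forall e, 0 < e -> exists d, 0 < d /\ forall s t, Rabs (s - s0) < d -> Rabs (t - t0) < d ->
  Cmod (D s t - D s0 t0) < e.

Lemma rcont2_snd (A : R -> C) s0 t0 : rcont A t0 -> rcont2 (fun _ t => A t) s0 t0.
Proof. intros H e He. destruct (H e He) as [d [Hd P]]. exists d. split; auto. Qed.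

Lemma rcont2_fst s0 t0 : rcont2 (fun s _ => RtoC s) s0 t0.
Proof.
  intros e He. exists e. split; auto. intros s t Hs _.
  replace (RtoC s - RtoC s0)%C with (RtoC (s - s0)) by (apply C_ext; simpl; ring). rewrite Cmod_R. auto.
Qed.

Lemma rcont2_plus (D1 D2 : R -> R -> C) s0 t0 : rcont2 D1 s0 t0 -> rcont2 D2 s0 t0 ->
  rcont2 (fun s t => D1 s t + D2 s t)%C s0 t0.
Proof.
  intros H1 H2 e He. destruct (H1 (e/2) ltac:(lra)) as [d1 [Hd1 P1]].
  destruct (H2 (e/2) ltac:(lra)) as [d2 [Hd2 P2]].
  exists (Rmin d1 d2). split; [apply Rmin_pos; auto|]. intros s t Hs Ht.
  assert (A1 := P1 s t ltac:(eapply Rlt_le_trans; [apply Hs|apply Rmin_l]) ltac:(eapply Rlt_le_trans;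
      [apply Ht|apply Rmin_l])).
  assert (A2 := P2 s t ltac:(eapply Rlt_le_trans; [apply Hs|apply Rmin_r]) ltac:(eapply Rlt_le_trans;
      [apply Ht|apply Rmin_r])).
  replace (D1 s t + D2 s t - (D1 s0 t0 + D2 s0 t0))%C with ((D1 s t - D1 s0 t0) + (D2 s t - D2 s0 t0))%C
    by ring.
  eapply Rle_lt_trans; [apply Cmod_triangle|]. lra.
Qed.

Lemma rcont2_mult (D1 D2 : R -> R -> C) s0 t0 : rcont2 D1 s0 t0 -> rcont2 D2 s0 t0 ->
  rcont2 (fun s t => D1 s t * D2 s t)%C s0 t0.
Proof.
  intros H1 H2 e He. destruct (Cmult_close (D1 s0 t0) (D2 s0 t0) e He) as [d [Hd P]].
  destruct (H1 d Hd) as [d1 [Hd1 P1]]. destruct (H2 d Hd) as [d2 [Hd2 P2]].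
  exists (Rmin d1 d2). split; [apply Rmin_pos; auto|]. intros s t Hs Ht. apply P.
  - apply P1; (eapply Rlt_le_trans; [eauto|apply Rmin_l]).
  - apply P2; (eapply Rlt_le_trans; [eauto|apply Rmin_r]).
Qed.

Lemma rcont2_comp (g : C -> C) (D : R -> R -> C) s0 t0 : rcont2 D s0 t0 -> ccont g (D s0 t0) ->
  rcont2 (fun s t => g (D s t)) s0 t0.
Proof.
  intros H Hg e He. destruct (Hg e He) as [d1 [Hd1 P1]]. destruct (H d1 Hd1) as [d [Hd P]].
  exists d. split; auto.
Qed.

Lemma rcont_of_rcont2 (D : R -> R -> C) s0 t0 : rcont2 D s0 t0 -> rcont (D s0) t0.
Proof.
  intros H e He. destruct (H e He) as [d [Hd P]]. exists d. split; auto. intros t Ht. apply P; auto.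
  replace (s0 - s0) with 0 by ring. rewrite Rabs_R0. auto.
Qed.

Lemma is_derive_RInt_Re_param (F D : R -> R -> C) a b s0 eta : a <= b -> 0 < eta ->
  (forall s t, Rabs (s - s0) < eta -> rder (fun s => F s t) s (D s t)) ->
  (forall t, a <= t <= b -> rcont2 D s0 t) ->
  (forall s, Rabs (s - s0) < eta -> forall t, a <= t <= b -> rcont (F s) t) ->
  is_derive (fun s => RInt (fun t => Re (F s t)) a b) s0 (RInt (fun t => Re (D s0 t)) a b).
Proof.
  intros Hab Heta Hd Hc Hf.
  assert (Hder : forall s t, Rabs (s - s0) < eta -> is_derive (fun z => Re (F z t)) s (Re (D s t))).
  { intros s t Hs. apply is_derive_Reals. apply derivable_pt_lim_Re. apply Hd; auto. }
  assert (HD : forall s t, Rabs (s - s0) < eta -> Derive (fun z => Re (F z t)) s = Re (D s t)).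
  { intros. apply is_derive_unique. auto. }
  assert (H := is_derive_RInt_param (fun s t => Re (F s t)) a b s0).
  rewrite (RInt_ext (fun t => Re (D s0 t)) (fun t => Derive (fun u => Re (F u t)) s0)).
  2:{ intros t _. rewrite HD; auto. replace (s0 - s0) with 0 by ring. rewrite Rabs_R0. auto. }
  apply H.
  - exists (mkposreal eta Heta). intros y Hy t Ht. exists (Re (D y t)). apply Hder. exact Hy.
  - intros t Ht. rewrite Rmin_left, Rmax_right in Ht by lra.
    intros [e He]. destruct (Hc t Ht e He) as [d [Hdpos P]].
    exists (mkposreal (Rmin d eta) (Rmin_pos _ _ Hdpos Heta)). simpl. intros u v Hu Hv.
    rewrite !HD; [| replace (s0 - s0) with 0 by ring; rewrite Rabs_R0; auto | eapply Rlt_le_trans;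
        [apply Hu|apply Rmin_r]].
    rewrite <- Re_minus. eapply Rle_lt_trans; [apply re_le_Cmod|]. apply P.
    + eapply Rlt_le_trans; [apply Hu|apply Rmin_l].
    + eapply Rlt_le_trans; [apply Hv|apply Rmin_l].
  - exists (mkposreal eta Heta). intros y Hy.
    assert (Ex : CexInt (F y) a b) by (apply CexInt_of_rcont; auto).
    exists (Re (CInt (F y) a b)). apply CisInt_fst. apply CisInt_RInt. auto.
Qed.

Lemma Re_CInt_param_eq (F D : R -> R -> C) a b e0 : a <= b -> 0 < e0 ->
  (forall s t, -e0 < s < 1 + e0 -> rder (fun s => F s t) s (D s t)) ->
  (forall s t, 0 <= s <= 1 -> a <= t <= b -> rcont2 D s t) ->
  (forall s t, -e0 < s < 1 + e0 -> a <= t <= b -> rcont (F s) t) ->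
  (forall s, 0 <= s <= 1 -> CInt (D s) a b = RtoC 0) ->
  Re (CInt (F 1) a b) = Re (CInt (F 0) a b).
Proof.
  intros Hab He Hd Hc Hf HD.
  rewrite !CInt_Re by (apply CexInt_of_rcont; auto; intros; apply Hf; auto; lra).
  apply (const_of_zero_derive (fun s => RInt (fun t => Re (F s t)) a b)).
  intros s0 Hs0.
  replace 0 with (RInt (fun t => Re (D s0 t)) a b).
  2:{ rewrite <- CInt_Re. rewrite HD; auto. apply CexInt_of_rcont; auto. intros t Ht. apply rcont_of_rcont2. apply Hc; auto. }
  apply (is_derive_RInt_Re_param F D a b s0 e0); auto.
  - intros s t Hs. apply Hd. apply Rabs_def2 in Hs. lra.
  - intros s Hs t Ht. apply Hf; auto. apply Rabs_def2 in Hs. lra.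
Qed.

(* Both real and imaginary parts (the latter as the real part of [-i F]) are constant in [s]. *)
Lemma CInt_param_eq (F D : R -> R -> C) a b e0 : a <= b -> 0 < e0 ->
  (forall s t, -e0 < s < 1 + e0 -> rder (fun s => F s t) s (D s t)) ->
  (forall s t, 0 <= s <= 1 -> a <= t <= b -> rcont2 D s t) ->
  (forall s t, -e0 < s < 1 + e0 -> a <= t <= b -> rcont (F s) t) ->
  (forall s, 0 <= s <= 1 -> CInt (D s) a b = RtoC 0) ->
  CInt (F 1) a b = CInt (F 0) a b.
Proof.
  intros Hab He Hd Hc Hf HD.
  assert (ExF : forall s, -e0 < s < 1 + e0 -> CexInt (F s) a b) by (intros; apply CexInt_of_rcont; auto).
  apply C_ext.
  - apply (Re_CInt_param_eq F D a b e0); auto.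
  - assert (R : Re (CInt (fun t => - Ci * F 1 t)%C a b) = Re (CInt (fun t => - Ci * F 0 t)%C a b)).
    { apply (Re_CInt_param_eq (fun s t => - Ci * F s t)%C (fun s t => - Ci * D s t)%C a b e0 Hab He).
      + intros. apply rder_scal. auto.
      + intros. apply rcont2_mult; [apply rcont2_snd; apply rcont_const|]. auto.
      + intros. apply rcont_mult; [apply rcont_const|]. auto.
      + intros s Hs. rewrite CInt_scal
        by (apply CexInt_of_rcont; auto; intros t Ht; apply rcont_of_rcont2; apply Hc; auto).
        rewrite HD by auto. apply C_ext; unfold Ci; simpl; ring. }
    rewrite !CInt_scal in R by (apply ExF; lra). rewrite !Re_opp_Ci_mul in R. exact R.
Qed.

Lemma cder_CInt_param (F : C -> R -> C) (D : R -> C) w0 a b eta Cst : a <= b -> 0 < eta -> 0 <= Cst ->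
  (forall k, Cmod k < eta -> forall t, a <= t <= b -> Cmod (F (w0 + k)%C t - F w0 t - k * D t)%C <= Cst * (Cmod k * Cmod k)) ->
  (forall k, Cmod k < eta -> CexInt (F (w0 + k)%C) a b) -> CexInt D a b ->
  cder (fun w => CInt (F w) a b) w0 (CInt D a b).
Proof.
  intros Hab Heta HC HB HF HD e He.
  exists (Rmin eta (e / ((b - a) * Cst + 1))). split.
  { apply Rmin_pos; auto. apply Rdiv_lt_0_compat; auto. pose proof (Rmult_le_pos (b - a) Cst ltac:(lra) HC). lra. }
  intros k Hk.
  assert (Hk1 : Cmod k < eta) by (eapply Rlt_le_trans; [apply Hk|apply Rmin_l]).
  assert (Hk2 : Cmod k < e / ((b - a) * Cst + 1)) by (eapply Rlt_le_trans; [apply Hk|apply Rmin_r]).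
  assert (H0 : CexInt (F w0) a b).
  { replace w0 with (w0 + 0)%C by ring. apply HF. rewrite Cmod_0. auto. }
  assert (K := CisInt_minus _ _ _ _ _ _ (CisInt_minus _ _ _ _ _ _ (CisInt_RInt _ _ _ (HF k Hk1))
      (CisInt_RInt _ _ _ H0))
                   (CisInt_scal k _ _ _ _ (CisInt_RInt _ _ _ HD))).
  rewrite <- (CInt_unique _ _ _ _ K).
  eapply Rle_trans. apply CInt_bound; auto.
  { exists (CInt (F (w0 + k)%C) a b - CInt (F w0) a b - k * CInt D a b)%C. exact K. }
  pose proof (Cmod_ge_0 k). pose proof (Rmult_le_pos (b - a) Cst ltac:(lra) HC).
  replace ((b - a) * (Cst * (Cmod k * Cmod k))) with (((b - a) * Cst) * Cmod k * Cmod k) by ring.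
  apply Rmult_le_compat_r; auto.
  apply Rle_trans with (((b - a) * Cst + 1) * Cmod k); [nra|].
  apply Rlt_le in Hk2. apply (Rmult_le_compat_l ((b - a) * Cst + 1)) in Hk2; [|lra].
  replace (((b - a) * Cst + 1) * (e / ((b - a) * Cst + 1))) with e in Hk2 by (field; lra). lra.
Qed.

Definition kern1 (a : C) : C := (/ a)%C.

Definition kern2 (a : C) : C := (/ (a * a))%C.

Definition kern3 (a : C) : C := (/ (a * a * a))%C.

Definition kern4 (a : C) : C := (/ (a * a * a * a))%C.

Lemma Cmod_sub_ge_half (a k : C) m : 0 < m -> m <= Cmod a -> Cmod k <= m / 2 -> m / 2 <= Cmod (a - k).
Proof. intros. pose proof (Cmod_triangle_rev a k). lra. Qed.

Lemma kern1_taylor m (a k : C) : 0 < m -> m <= Cmod a -> Cmod a <= 2 -> Cmod k <= m / 2 -> Cmod k <= 1 ->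
  Cmod (kern1 (a - k) - kern1 a - k * (1 * kern2 a))%C <= (/ (m * m) * / (m / 2)) * (Cmod k * Cmod k).
Proof.
  intros Hm Ha Ha2 Hk Hk1. assert (Hb := Cmod_sub_ge_half a k m Hm Ha Hk).
  assert (Na := C_neq0_of_Cmod_ge a m Hm Ha). assert (Nb := C_neq0_of_Cmod_ge (a - k) (m/2) ltac:(lra) Hb).
  unfold kern1, kern2.
  replace (/ (a - k) - / a - k * (1 * / (a * a)))%C with (k * k * (/ (a * a) * / (a - k)))%C by (field; auto).
  rewrite !Cmod_mult.
  assert (I1 : Cmod (/ (a * a))%C <= / (m * m)) by (apply Cmod_inv_le; [nra|rewrite Cmod_mult; nra]).
  assert (I2 : Cmod (/ (a - k))%C <= / (m / 2)) by (apply Cmod_inv_le; lra).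
  pose proof (Cmod_ge_0 k). pose proof (Cmod_ge_0 (/ (a * a))%C). pose proof (Cmod_ge_0 (/ (a - k))%C).
  replace (/ (m * m) * / (m / 2) * (Cmod k * Cmod k)) with (Cmod k * Cmod k * (/ (m * m) * / (m / 2)))
    by ring.
  apply Rmult_le_compat_l; [nra|]. apply Rmult_le_compat; auto.
Qed.

Lemma kern2_taylor m (a k : C) : 0 < m -> m <= Cmod a -> Cmod a <= 2 -> Cmod k <= m / 2 -> Cmod k <= 1 ->
  Cmod (kern2 (a - k) - kern2 a - k * (2 * kern3 a))%C <= (8 * / (m * m * m) * / (m / 2 * (m / 2)))
      * (Cmod k * Cmod k).
Proof.
  intros Hm Ha Ha2 Hk Hk1. assert (Hb := Cmod_sub_ge_half a k m Hm Ha Hk).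
  assert (Na := C_neq0_of_Cmod_ge a m Hm Ha). assert (Nb := C_neq0_of_Cmod_ge (a - k) (m/2) ltac:(lra) Hb).
  unfold kern2, kern3.
  replace (/ ((a - k) * (a - k)) - / (a * a) - k * (2 * / (a * a * a)))%C with
    (k * k * ((3 * a - 2 * k) * / (a * a * a) * / ((a - k) * (a - k))))%C by (field; auto).
  rewrite !Cmod_mult.
  assert (I1 : Cmod (/ (a * a * a))%C <= / (m * m * m)).
  { apply Cmod_inv_le; [repeat apply Rmult_lt_0_compat; lra|rewrite !Cmod_mult].
    apply Rmult_le_compat; [nra|lra|apply Rmult_le_compat; lra|lra]. }
  assert (I2 : Cmod (/ ((a - k) * (a - k)))%C <= / (m / 2 * (m / 2))).
  { apply Cmod_inv_le; [nra|rewrite Cmod_mult; apply Rmult_le_compat; lra]. }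
  assert (N : Cmod (3 * a - 2 * k)%C <= 8).
  { eapply Rle_trans; [apply Cmod_minus_le|]. rewrite !Cmod_mult, !Cmod_R, !Rabs_pos_eq by lra. lra. }
  pose proof (Cmod_ge_0 k). pose proof (Cmod_ge_0 (/ (a * a * a))%C).
  pose proof (Cmod_ge_0 (/ ((a - k) * (a - k)))%C).
  pose proof (Cmod_ge_0 (3 * a - 2 * k)%C).
  replace (8 * / (m * m * m) * / (m / 2 * (m / 2)) * (Cmod k * Cmod k))
    with (Cmod k * Cmod k * (8 * / (m * m * m) * / (m / 2 * (m / 2)))) by ring.
  apply Rmult_le_compat_l; [nra|]. apply Rmult_le_compat; auto.
  - apply Rmult_le_pos; auto.
  - apply Rmult_le_compat; auto.
Qed.

Lemma kern3_taylor m (a k : C) : 0 < m -> m <= Cmod a -> Cmod a <= 2 -> Cmod k <= m / 2 -> Cmod k <= 1 ->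
  Cmod (kern3 (a - k) - kern3 a - k * (3 * kern4 a))%C <= (43 * / (m * m * m * m) * / (m / 2 * (m / 2)
      * (m / 2))) * (Cmod k * Cmod k).
Proof.
  intros Hm Ha Ha2 Hk Hk1. assert (Hb := Cmod_sub_ge_half a k m Hm Ha Hk).
  assert (Na := C_neq0_of_Cmod_ge a m Hm Ha). assert (Nb := C_neq0_of_Cmod_ge (a - k) (m/2) ltac:(lra) Hb).
  unfold kern3, kern4.
  replace (/ ((a - k) * (a - k) * (a - k)) - / (a * a * a) - k * (3 * / (a * a * a * a)))%C with
    (k * k * ((6 * a * a - 8 * a * k + 3 * k * k) * / (a * a * a * a) * / ((a - k) * (a - k) * (a - k))))%C
      by (field; auto).
  rewrite !Cmod_mult.
  assert (I1 : Cmod (/ (a * a * a * a))%C <= / (m * m * m * m)).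
  { apply Cmod_inv_le; [repeat apply Rmult_lt_0_compat; lra|rewrite !Cmod_mult].
    apply Rmult_le_compat; [nra|lra| |lra]. apply Rmult_le_compat; [nra|lra|apply Rmult_le_compat; lra|lra]. }
  assert (I2 : Cmod (/ ((a - k) * (a - k) * (a - k)))%C <= / (m / 2 * (m / 2) * (m / 2))).
  { apply Cmod_inv_le; [repeat apply Rmult_lt_0_compat; lra|rewrite !Cmod_mult].
    apply Rmult_le_compat; [nra|lra|apply Rmult_le_compat; lra|lra]. }
  assert (N : Cmod (6 * a * a - 8 * a * k + 3 * k * k)%C <= 43).
  { eapply Rle_trans; [apply Cmod_triangle|]. eapply Rle_trans;
      [apply Rplus_le_compat_r; apply Cmod_minus_le|].
    rewrite !Cmod_mult, !Cmod_R, !Rabs_pos_eq by lra.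
    pose proof (Cmod_ge_0 a). pose proof (Cmod_ge_0 k).
    assert (Cmod a * Cmod a <= 4) by nra. assert (Cmod a * Cmod k <= 2) by nra.
    assert (Cmod k * Cmod k <= 1) by nra.
    nra. }
  pose proof (Cmod_ge_0 k). pose proof (Cmod_ge_0 (/ (a * a * a * a))%C).
  pose proof (Cmod_ge_0 (/ ((a - k) * (a - k) * (a - k)))%C).
  pose proof (Cmod_ge_0 (6 * a * a - 8 * a * k + 3 * k * k)%C).
  replace (43 * / (m * m * m * m) * / (m / 2 * (m / 2) * (m / 2)) * (Cmod k * Cmod k))
    with (Cmod k * Cmod k * (43 * / (m * m * m * m) * / (m / 2 * (m / 2) * (m / 2)))) by ring.
  apply Rmult_le_compat_l; [nra|]. apply Rmult_le_compat; auto.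
  - apply Rmult_le_pos; auto.
  - apply Rmult_le_compat; auto.
Qed.

Lemma rcont_kern_circle (Kn : C -> C) r (w : C) t : (forall x, x <> RtoC 0 -> ccont Kn x) -> 0 <= r ->
  Cmod w < r ->
  rcont (fun t => Kn (circle r t - w)%C) t.
Proof.
  intros HK Hr Hw. apply (rcont_comp Kn (fun t => circle r t - w)%C).
  - apply rcont_minus; [apply rcont_circle|apply rcont_const].
  - apply HK. apply (C_neq0_of_Cmod_ge _ (r - Cmod w)); [lra|]. apply Cmod_circle_sub_ge; auto.
Qed.

Lemma cder_circle_int (Kn Kn1 : C -> C) (cn : C) (B : R -> R) (phi : R -> C) r w0 :
  0 < r < 1 -> Cmod w0 < r ->
  (forall t, 0 <= t <= 2 * PI -> rcont phi t) ->
  (forall x, x <> RtoC 0 -> ccont Kn x) -> (forall x, x <> RtoC 0 -> ccont Kn1 x) ->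
  (forall m a k, 0 < m -> m <= Cmod a -> Cmod a <= 2 -> Cmod k <= m / 2 -> Cmod k <= 1 ->
     Cmod (Kn (a - k) - Kn a - k * (cn * Kn1 a))%C <= B m * (Cmod k * Cmod k)) ->
  (forall m, 0 < m -> 0 <= B m) ->
  cder (fun w => CInt (fun t => phi t * Kn (circle r t - w))%C 0 (2 * PI)) w0
       (cn * CInt (fun t => phi t * Kn1 (circle r t - w0))%C 0 (2 * PI))%C.
Proof.
  intros Hr Hw0 Hphi HK HK1 HB HBp.
  set (m := r - Cmod w0). assert (Hm : 0 < m) by (unfold m; lra).
  pose proof twoPI_pos as H2P.
  destruct (rcont_bounded phi 0 (2 * PI) ltac:(lra) Hphi) as [M [HM0 HM]].
  assert (Ex1 : CexInt (fun t => phi t * Kn1 (circle r t - w0))%C 0 (2 * PI)).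
  { apply CexInt_of_rcont; [lra|]. intros t Ht. apply rcont_mult; auto. apply rcont_kern_circle; auto; lra. }
  rewrite <- CInt_scal by exact Ex1.
  apply (cder_CInt_param _ (fun t => cn * (phi t * Kn1 (circle r t - w0)))%C w0 0 (2 * PI) (Rmin (m / 2) 1)
      (M * B m)); [lra|apply Rmin_pos; lra|apply Rmult_le_pos; auto| | |].
  - intros k Hk t Ht. cbv beta.
    assert (Hk1 : Cmod k <= m / 2) by (left; eapply Rlt_le_trans; [apply Hk|apply Rmin_l]).
    assert (Hk2 : Cmod k <= 1) by (left; eapply Rlt_le_trans; [apply Hk|apply Rmin_r]).
    set (a := (circle r t - w0)%C).
    replace (phi t * Kn (circle r t - (w0 + k)) - phi t * Kn a - k * (cn * (phi t * Kn1 a)))%C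
      with (phi t * (Kn (a - k) - Kn a - k * (cn * Kn1 a)))%C
        by (unfold a; replace (circle r t - (w0 + k))%C with (circle r t - w0 - k)%C by ring; ring).
    rewrite Cmod_mult.
    assert (Ha1 : m <= Cmod a) by (apply Cmod_circle_sub_ge; lra).
    assert (Ha2 : Cmod a <= 2)
      by (unfold a; eapply Rle_trans; [apply Cmod_minus_le|]; rewrite Cmod_circle by lra; lra).
    specialize (HB m a k Hm Ha1 Ha2 Hk1 Hk2).
    rewrite Rmult_assoc. apply Rmult_le_compat; auto; [apply Cmod_ge_0|apply Cmod_ge_0].
  - intros k Hk. apply CexInt_of_rcont; [lra|]. intros t Ht. apply rcont_mult; auto.
    assert (Hk1 : Cmod k < m / 2) by (eapply Rlt_le_trans; [apply Hk|apply Rmin_l]).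
    apply rcont_kern_circle; auto; [lra|]. pose proof (Cmod_triangle w0 k). unfold m in Hk1. lra.
  - apply CexInt_of_rcont; [lra|]. intros t Ht. apply rcont_mult; [apply rcont_const|]. apply rcont_mult;
  auto. apply rcont_kern_circle; auto; lra.
Qed.

Lemma ccont_kern1 x : x <> RtoC 0 -> ccont kern1 x.
Proof. intros. unfold kern1. apply ccont_inv. auto. Qed.

Lemma ccont_kern2 x : x <> RtoC 0 -> ccont kern2 x.
Proof.
  intros. unfold kern2. apply (ccont_comp (fun w => / w)%C (fun w => w * w)%C).
  apply ccont_mult; apply ccont_id. apply ccont_inv. apply Cmult_neq_0; auto.
Qed.

Lemma ccont_kern3 x : x <> RtoC 0 -> ccont kern3 x.
Proof.
  intros. unfold kern3. apply (ccont_comp (fun w => / w)%C (fun w => w * w * w)%C).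
  repeat apply ccont_mult; apply ccont_id. apply ccont_inv. repeat apply Cmult_neq_0; auto.
Qed.

Lemma ccont_kern4 x : x <> RtoC 0 -> ccont kern4 x.
Proof.
  intros. unfold kern4. apply (ccont_comp (fun w => / w)%C (fun w => w * w * w * w)%C).
  repeat apply ccont_mult; apply ccont_id. apply ccont_inv. repeat apply Cmult_neq_0; auto.
Qed.

Definition circle_int (Kn : C -> C) (phi : R -> C) r (w : C) : C :=
  CInt (fun t => phi t * Kn (circle r t - w))%C 0 (2 * PI).

Lemma cder_circle_int1 phi r w0 : 0 < r < 1 -> Cmod w0 < r -> (forall t, 0 <= t <= 2 * PI -> rcont phi t) ->
  cder (circle_int kern1 phi r) w0 (1 * circle_int kern2 phi r w0)%C.
Proof.
  intros. apply (cder_circle_int kern1 kern2 1 (fun m => / (m * m) * / (m / 2))); auto.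
  - apply ccont_kern1. - apply ccont_kern2.
  - intros. apply kern1_taylor; auto.
  - intros. apply Rmult_le_pos; left; apply Rinv_0_lt_compat; nra.
Qed.

Lemma cder_circle_int2 phi r w0 : 0 < r < 1 -> Cmod w0 < r -> (forall t, 0 <= t <= 2 * PI -> rcont phi t) ->
  cder (circle_int kern2 phi r) w0 (2 * circle_int kern3 phi r w0)%C.
Proof.
  intros. apply (cder_circle_int kern2 kern3 2 (fun m => 8 * / (m * m * m) * / (m / 2 * (m / 2)))); auto.
  - apply ccont_kern2. - apply ccont_kern3.
  - intros. apply kern2_taylor; auto.
  - intros. apply Rmult_le_pos; [apply Rmult_le_pos; [lra|]|]; left; apply Rinv_0_lt_compat;
  repeat apply Rmult_lt_0_compat; lra.
Qed.

Lemma cder_circle_int3 phi r w0 : 0 < r < 1 -> Cmod w0 < r -> (forall t, 0 <= t <= 2 * PI -> rcont phi t) ->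
  cder (circle_int kern3 phi r) w0 (3 * circle_int kern4 phi r w0)%C.
Proof.
  intros. apply (cder_circle_int kern3 kern4 3 (fun m => 43 * / (m * m * m * m) * / (m / 2 * (m / 2)
      * (m / 2)))); auto.
  - apply ccont_kern3. - apply ccont_kern4.
  - intros. apply kern3_taylor; auto.
  - intros. apply Rmult_le_pos; [apply Rmult_le_pos; [lra|]|]; left; apply Rinv_0_lt_compat;
  repeat apply Rmult_lt_0_compat; lra.
Qed.

Lemma circle_int_kern2_circle r (w : C) : 0 < r < 1 -> Cmod w < r -> circle_int kern2 (circle r) r w = RtoC 0.
Proof.
  intros Hr Hw. unfold circle_int.
  assert (Hnz : forall t, (circle r t - w)%C <> RtoC 0)
    by (intros t; apply (C_neq0_of_Cmod_ge _ (r - Cmod w)); [lra|apply Cmod_circle_sub_ge; lra]).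
  assert (H : CisInt (fun t => (- / ((circle r t - w) * (circle r t - w)))
      * (Ci * circle r t + 0))%C 0 (2 * PI)
               (kern1 (circle r (2 * PI) - w) - kern1 (circle r 0 - w))%C).
  { apply (CisInt_derive (fun t => kern1 (circle r t - w))%C); [pose proof twoPI_pos; lra| |].
    - intros t _. apply (rder_comp kern1 (fun t => circle r t - w)%C). apply rder_circle_sub.
    apply cder_inv. auto.
    - intros t _. apply rcont_mult.
      + apply (rcont_comp (fun x => - x)%C (fun t => / ((circle r t - w) * (circle r t - w)))%C).
        * apply (rcont_kern_circle kern2); [apply ccont_kern2|lra|lra].
        * intros e He. exists e. split; auto. intros x Hx.
        replace (- x - - / ((circle r t - w) * (circle r t - w)))%C
          with (- (x - / ((circle r t - w) * (circle r t - w))))%C by ring. rewrite Cmod_opp. auto.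
      + apply rcont_plus; [apply rcont_mult; [apply rcont_const|apply rcont_circle]|apply rcont_const]. }
  rewrite circle_2PI in H. apply (CisInt_scal Ci) in H.
  replace (Ci * (kern1 (circle r 0 - w) - kern1 (circle r 0 - w)))%C with (RtoC 0) in H by ring.
  apply CInt_unique. eapply CisInt_ext; [|exact H]. intros t _. cbv beta. unfold kern2.
  replace (Ci * (- / ((circle r t - w) * (circle r t - w)) * (Ci * circle r t + 0)))%C with
     (- (Ci * Ci) * circle r t * / ((circle r t - w) * (circle r t - w)))%C by ring.
  rewrite Ci_mul_Ci. ring.
Qed.

Lemma circle_int_kern1_circle r (w : C) : 0 < r < 1 -> Cmod w < r ->
  circle_int kern1 (circle r) r w = RtoC (2 * PI).
Proof.
  intros Hr Hw.
  assert (Hc : forall t, 0 <= t <= 2 * PI -> rcont (circle r) t) by (intros; apply rcont_circle).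
  assert (H0 : circle_int kern1 (circle r) r (RtoC 0) = RtoC (2 * PI)).
  { unfold circle_int. apply CInt_unique. replace (RtoC (2 * PI)) with (RtoC (2 * PI - 0)
      * 1)%C by (rewrite Rminus_0_r; ring).
    eapply CisInt_ext; [|apply CisInt_const]. intros t _. unfold kern1.
    replace (circle r t - 0)%C with (circle r t) by ring. field. apply circle_neq0; lra. }
  rewrite <- H0.
  assert (Hd : forall s, 0 <= s <= 1 -> rder (fun s => circle_int kern1 (circle r) r (0 + RtoC s * (w - 0))%C) s (RtoC 0 * (w - 0))%C).
  { intros s Hs. apply rder_comp_line.
    assert (Hsw : Cmod (0 + RtoC s * (w - 0))%C < r).
    { replace (0 + RtoC s * (w - 0))%C with (RtoC s * w)%C by ring. rewrite Cmod_RtoC_mult, Rabs_pos_eq by lra.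
      pose proof (Cmod_ge_0 w). nra. }
    assert (C0 := cder_circle_int1 (circle r) r _ Hr Hsw Hc).
    rewrite (circle_int_kern2_circle r _ Hr Hsw) in C0.
    replace (1 * RtoC 0)%C with (RtoC 0) in C0 by ring. exact C0. }
  assert (F := CisInt_derive _ _ 0 1 ltac:(lra) Hd ltac:(intros; apply rcont_const)).
  assert (F2 := CisInt_const (RtoC 0 * (w - 0))%C 0 1).
  apply CInt_unique in F. apply CInt_unique in F2. rewrite F2 in F.
  replace (0 + RtoC 1 * (w - 0))%C with w in F by ring.
  replace (0 + RtoC 0 * (w - 0))%C with (RtoC 0) in F by ring.
  apply (f_equal (fun x => x + circle_int kern1 (circle r) r 0)%C) in F.
  replace (RtoC (1 - 0) * (RtoC 0 * (w - 0)) + circle_int kern1 (circle r) r 0)%C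
    with (circle_int kern1 (circle r) r 0) in F by ring.
  replace (circle_int kern1 (circle r) r w)
    with (circle_int kern1 (circle r) r w - circle_int kern1 (circle r) r 0 + circle_int kern1 (circle r) r 0)%C by ring.
  symmetry; exact F.
Qed.

Lemma homotopy_in_disk r (w : C) t s : 0 < r < 1 -> Cmod w < r -> - ((1 - r) / 4) < s < 1 + (1 - r) / 4 ->
  Cmod (w + RtoC s * (circle r t - w))%C < 1.
Proof.
  intros Hr Hw Hs. set (z := circle r t). assert (Hz : Cmod z = r) by (apply Cmod_circle; lra).
  assert (Hzw : Cmod (z - w) <= 2 * r) by (eapply Rle_trans; [apply Cmod_minus_le|]; lra).
  pose proof (Cmod_ge_0 w). pose proof (Cmod_ge_0 (z - w)).
  destruct (Rlt_le_dec s 0) as [Hs0|Hs0].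
  - eapply Rle_lt_trans; [apply Cmod_triangle|]. rewrite Cmod_RtoC_mult, Rabs_left by lra.
    assert (- s * Cmod (z - w) <= (1 - r) / 4 * (2 * r)) by (apply Rmult_le_compat; lra).
    nra.
  - destruct (Rle_lt_dec s 1) as [Hs1|Hs1].
    + pose proof (Cmod_convex_le w z s ltac:(lra)). nra.
    + replace (w + RtoC s * (z - w))%C with (z + RtoC (s - 1) * (z - w))%C by (rewrite RtoC_minus; ring).
      eapply Rle_lt_trans; [apply Cmod_triangle|]. rewrite Cmod_RtoC_mult, Rabs_pos_eq by lra.
      assert ((s - 1) * Cmod (z - w) <= (1 - r) / 4 * (2 * r)) by (apply Rmult_le_compat; lra).
      nra.
Qed.

Lemma rcont_line (w : C) (q : R -> C) s t : rcont q t -> rcont (fun t => w + RtoC s * q t)%C t.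
Proof. intros H. apply rcont_plus; [apply rcont_const|]. apply rcont_mult; [apply rcont_const|auto]. Qed.

Lemma CisInt_homotopy_circle (u g : C -> C) r (w : C) s : 0 < r < 1 -> Cmod w < r ->
  (forall z, Cmod z < 1 -> cder u z (g z)) -> cont_disk g -> 0 <= s <= 1 ->
  CisInt (fun t => g (w + RtoC s * (circle r t - w)) * circle r t)%C 0 (2 * PI) (RtoC 0).
Proof.
  intros Hr Hw Hu Hg Hs. pose proof twoPI_pos as H2P.
  set (P := fun t => (w + RtoC s * (circle r t - w))%C).
  assert (HP : forall t, Cmod (P t) < 1) by (intros t; apply homotopy_in_disk; auto; lra).
  destruct (Req_dec s 0) as [->|Hs0].
  { assert (Z := CisInt_scal (g w) _ _ _ _ (CisInt_circle r)).
    replace (g w * RtoC 0)%C with (RtoC 0) in Z by ring.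
    eapply CisInt_ext; [|exact Z]. intros t _. cbv beta. do 2 f_equal. ring. }
  assert (FT : CisInt (fun t => g (P t) * (0 + RtoC s * (Ci * circle r t + 0)))%C 0 (2 * PI)
                (u (P (2 * PI)%R) - u (P 0))%C).
  { apply (CisInt_derive (fun t => u (P t))); [lra| |].
    - intros t _. apply (rder_comp u P); [|apply Hu, HP]. unfold P.
      apply rder_plus; [apply rder_const|]. apply rder_scal. apply rder_circle_sub.
    - intros t _. apply rcont_mult.
      + apply (rcont_comp g P); [|apply Hg, HP]. unfold P. apply rcont_line.
        apply rcont_minus; [apply rcont_circle|apply rcont_const].
      + apply rcont_plus; [apply rcont_const|]. apply rcont_mult; [apply rcont_const|].
        apply rcont_plus; [apply rcont_mult; [apply rcont_const|apply rcont_circle]|apply rcont_const]. }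
  unfold P at 2 3 in FT. rewrite circle_2PI in FT.
  apply (CisInt_scal (/ (RtoC s * Ci))%C) in FT.
  replace (/ (RtoC s * Ci) * (u (w + RtoC s * (circle r 0 - w)) - u (w + RtoC s * (circle r 0 - w))))%C
    with (RtoC 0) in FT by ring.
  eapply CisInt_ext; [|exact FT]. intros t _. unfold P. cbv beta. field.
  split; [apply Ci_neq0|]. intro E. apply RtoC_inj in E. auto.
Qed.

(* The Cauchy formula [2 pi u(w) = int u(z) z / (z - w) dt] on the circle [z = r e^{it}], obtained
   by contracting the circle to [w] along [s |-> w + s (z - w)]: the integral does not depend on [s]. *)
Lemma cauchy_formula (u g : C -> C) r (w : C) : 0 < r < 1 -> Cmod w < r ->
  (forall z, Cmod z < 1 -> cder u z (g z)) -> cont_disk g ->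
  (RtoC (2 * PI) * u w)%C = circle_int kern1 (fun t => u (circle r t) * circle r t)%C r w.
Proof.
  intros Hr Hw Hu Hg.
  pose proof twoPI_pos as H2P.
  set (e0 := (1 - r) / 4). assert (He0 : 0 < e0) by (unfold e0; lra).
  assert (Hnz : forall t, (circle r t - w)%C <> RtoC 0)
    by (intros t; apply (C_neq0_of_Cmod_ge _ (r - Cmod w)); [lra|apply Cmod_circle_sub_ge; lra]).
  set (c := fun t => (circle r t * kern1 (circle r t - w))%C).
  assert (Hcc : forall t, rcont c t)
    by (intros; unfold c; apply rcont_mult; [apply rcont_circle|apply rcont_kern_circle;
        [apply ccont_kern1|lra|lra]]).
  set (P := fun s t => (w + RtoC s * (circle r t - w))%C).
  set (F := fun s t => (u (P s t) * c t)%C).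
  set (D := fun s t => (g (P s t) * (circle r t - w) * c t)%C).
  assert (HzwR : forall t, rcont (fun t => circle r t - w)%C t)
    by (intros; apply rcont_minus; [apply rcont_circle|apply rcont_const]).
  assert (Main : CInt (F 1) 0 (2 * PI) = CInt (F 0) 0 (2 * PI)).
  { apply (CInt_param_eq F D 0 (2 * PI) e0); [lra|auto| | | |].
    - intros s t Hs. unfold F, D. apply rder_mult_const_r. unfold P.
      apply (rder_comp_line u w (circle r t - w) s). apply Hu. apply homotopy_in_disk; auto.
    - intros s t Hs Ht. unfold D. apply rcont2_mult; [apply rcont2_mult|].
      + apply (rcont2_comp g P). unfold P. apply rcont2_plus; [apply rcont2_snd; apply rcont_const|].
        apply rcont2_mult; [apply rcont2_fst|apply rcont2_snd; auto].
        apply Hg. apply homotopy_in_disk; auto. unfold e0; lra.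
      + apply rcont2_snd; auto.
      + apply rcont2_snd; auto.
    - intros s t Hs Ht. unfold F. apply rcont_mult; auto. apply (rcont_comp u (P s)).
      unfold P. apply rcont_line; auto. eapply ccont_of_cder. apply Hu. apply homotopy_in_disk; auto.
    - intros s Hs. apply CInt_unique.
      apply (CisInt_ext (fun t => g (P s t) * circle r t)%C).
      { intros t _. unfold D, c, kern1. field. auto. }
      apply (CisInt_homotopy_circle u g); auto. }
  unfold circle_int. unfold F in Main.
  assert (E1 : CInt (fun t => u (P 1 t) * c t)%C 0 (2 * PI)
               = CInt (fun t => u (circle r t) * circle r t * kern1 (circle r t - w))%C 0 (2 * PI)).
  { apply RInt_ext. intros t _. unfold P, c. replace (w + RtoC 1 * (circle r t - w))%C with (circle r t) by ring.
    match goal with |- ?a = ?b => change (@eq C a b) end. ring. }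
  assert (E0 : CInt (fun t => u (P 0 t) * c t)%C 0 (2 * PI) = (u w * circle_int kern1 (circle r) r w)%C).
  { unfold circle_int. rewrite <- CInt_scal.
    - apply RInt_ext. intros t _. unfold P, c. replace (w + RtoC 0 * (circle r t - w))%C with w by ring.
    reflexivity.
    - apply CexInt_of_rcont; [lra|]. intros.
      apply rcont_mult; [apply rcont_circle|apply rcont_kern_circle; [apply ccont_kern1|lra|lra]]. }
  rewrite <- E1, Main, E0, circle_int_kern1_circle by auto. ring.
Qed.

Definition cderiv (g : C -> C) (z : C) : C :=
  match excluded_middle_informative (exists l, cder g z l) with
  | left H => proj1_sig (constructive_indefinite_description _ H)
  | right _ => RtoC 0
  end.

Lemma cder_cderiv g z : holo_disk g -> Cmod z < 1 -> cder g z (cderiv g z).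
Proof.
  intros Hg Hz. unfold cderiv. destruct (excluded_middle_informative _) as [H|H].
  - destruct (constructive_indefinite_description _ H) as [l Hl]. exact Hl.
  - exfalso. exact (H (Hg z Hz)).
Qed.

(* [g] is the derivative of its primitive [u], and the Cauchy integral of [u] can be
   differentiated under the integral sign: [u], [g = u'] and [g'] are the integrals of
   [u(z) z] against the kernels [1/(z-w)], [1/(z-w)^2] and [2/(z-w)^3], and the last one is
   again differentiable in [w]. *)
Lemma holo_disk_cderiv g : holo_disk g -> holo_disk (cderiv g).
Proof.
  intros Hd z Hz.
  set (dg := cderiv g).
  assert (Hdg : forall z, Cmod z < 1 -> cder g z (dg z)) by (intros; apply cder_cderiv; auto).
  set (r := (1 + Cmod z) / 2). assert (Hr : 0 < r < 1) by (unfold r; pose proof (Cmod_ge_0 z); lra).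
  assert (Hzr : Cmod z < r) by (unfold r; lra).
  set (u := fun w => seg_integral g 0 w).
  assert (Hu : forall w, Cmod w < 1 -> cder u w (g w)) by (intros; apply cder_seg_integral; auto).
  assert (Hg := cont_disk_of_holo_disk g Hd).
  set (phi := fun t => (u (circle r t) * circle r t)%C).
  assert (Hphi : forall t, 0 <= t <= 2 * PI -> rcont phi t).
  { intros t _. unfold phi. apply rcont_mult; [|apply rcont_circle].
    apply (rcont_comp u (circle r)); [apply rcont_circle|]. eapply ccont_of_cder. apply Hu.
    rewrite Cmod_circle; lra. }
  set (c := (/ RtoC (2 * PI))%C).
  assert (H2P := twoPI_pos).
  assert (Hc0 : RtoC (2 * PI) <> RtoC 0) by (intro E; apply RtoC_inj in E; lra).
  assert (Rep1 : forall w, Cmod w < r -> u w = (c * circle_int kern1 phi r w)%C).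
  { intros w Hw. unfold phi. rewrite <- (cauchy_formula u g r w Hr Hw Hu Hg). unfold c. field. auto. }
  assert (Rep2 : forall w, Cmod w < r -> g w = (c * (1 * circle_int kern2 phi r w))%C).
  { intros w Hw. apply (cder_unique u w); [apply Hu; lra|].
    apply (cder_ext_near (fun w => c * circle_int kern1 phi r w)%C u w _ (r - Cmod w)); [lra| |].
    - intros w' Hw'. symmetry. apply Rep1. eapply Cmod_lt_of_sub_lt; eauto.
    - apply cder_scal. apply cder_circle_int1; auto. }
  assert (Rep3 : forall w, Cmod w < r -> dg w = (c * (1 * (2 * circle_int kern3 phi r w)))%C).
  { intros w Hw. apply (cder_unique g w); [apply Hdg; lra|].
    apply (cder_ext_near (fun w => c * (1 * circle_int kern2 phi r w))%C g w _ (r - Cmod w)); [lra| |].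
    - intros w' Hw'. symmetry. apply Rep2. eapply Cmod_lt_of_sub_lt; eauto.
    - apply cder_scal. apply cder_scal. apply cder_circle_int2; auto. }
  eexists.
  apply (cder_ext_near (fun w => c * (1 * (2 * circle_int kern3 phi r w)))%C dg z _ (r - Cmod z)); [lra| |].
  - intros w' Hw'. symmetry. apply Rep3. eapply Cmod_lt_of_sub_lt; eauto.
  - apply cder_scal. apply cder_scal. apply cder_scal. apply cder_circle_int3; auto.
Qed.


(** * The Cesàro operator *)

Lemma holo_disk_of_analytic f : analytic_on_disk f -> holo_disk f.
Proof. intros H z Hz. destruct (H z Hz) as [l Hl]. exists l. apply cder_of_is_derive. auto. Qed.

Lemma analytic_of_holo_disk f : holo_disk f -> analytic_on_disk f.
Proof. intros H z Hz. destruct (H z Hz) as [l Hl]. exists l. apply is_derive_of_cder. auto. Qed.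

Lemma one_minus_neq0 (z : C) : Cmod z < 1 -> (1 - z)%C <> RtoC 0.
Proof.
  intros Hz E. assert (z = RtoC 1) by (replace z with (1 - (1 - z))%C by ring; rewrite E; ring).
  subst. rewrite Cmod_1 in Hz. lra.
Qed.

Definition cesaro_integrand (f : C -> C) : C -> C := fun xi => (f xi / (1 - xi))%C.

Lemma holo_disk_cesaro_integrand f : holo_disk f -> holo_disk (cesaro_integrand f).
Proof.
  intros H z Hz. destruct (H z Hz) as [lf Hf].
  assert (Hi : cder (fun w => / (1 - w))%C z (- / ((1 - z) * (1 - z)) * - RtoC 1)%C).
  { apply (cder_comp (fun w => / w)%C (fun w => 1 - w)%C). apply cder_one_minus.
    apply cder_inv. apply one_minus_neq0; auto. }
  eexists. unfold cesaro_integrand. apply (cder_mult f (fun w => / (1 - w))%C z _ _ Hf Hi).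
Qed.

Lemma cesaro_integrand_0 f : cesaro_integrand f (RtoC 0) = f (RtoC 0).
Proof. unfold cesaro_integrand. replace (1 - RtoC 0)%C with (RtoC 1) by ring. field. Qed.

Lemma cesaro_neq0 f z : z <> RtoC 0 -> cesaro f z = (/ z * seg_integral (cesaro_integrand f) 0 z)%C.
Proof. intros H. unfold cesaro. destruct (Ceq_dec z 0) as [E|_]; [contradiction|reflexivity]. Qed.

Lemma cesaro_0 f : cesaro f (RtoC 0) = f (RtoC 0).
Proof.
  unfold cesaro. destruct (Ceq_dec (RtoC 0) 0) as [_|E]; [reflexivity|].
  exfalso. apply E. reflexivity.
Qed.

Lemma cder_cesaro_neq0 f z : holo_disk f -> Cmod z < 1 -> z <> RtoC 0 ->
  cder (cesaro f) z ((- / (z * z)) * seg_integral (cesaro_integrand f) 0 z + / z * cesaro_integrand f z)%C.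
Proof.
  intros Hf Hz Hz0.
  assert (Hm : 0 < Cmod z) by (apply (proj1 (Cmod_gt_0 z)); exact Hz0).
  apply (cder_ext_near (fun w => / w * seg_integral (cesaro_integrand f) 0 w)%C _ _ _ (Cmod z) Hm).
  { intros w Hw. symmetry. apply cesaro_neq0. intro E. subst w.
    replace (RtoC 0 - z)%C with (- z)%C in Hw by ring. rewrite Cmod_opp in Hw. lra. }
  apply (cder_mult (fun w => / w)%C (fun w => seg_integral (cesaro_integrand f) 0 w)).
  - apply cder_inv; auto.
  - exact (cder_seg_integral (cesaro_integrand f) (holo_disk_cesaro_integrand f Hf) z Hz).
Qed.

(* Near 0, [Cf(k) = int_0^1 h(tk) dt = h(0) + k h'(0) / 2 + o(k)]. *)
Lemma cder_cesaro_0 f : holo_disk f -> exists l, cder (cesaro f) (RtoC 0) l.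
Proof.
  intros Hf. assert (Hh := holo_disk_cesaro_integrand f Hf). assert (Hc := cont_disk_of_holo_disk _ Hh).
  destruct (Hh (RtoC 0) ltac:(rewrite Cmod_0; lra)) as [l0 Hl0].
  exists (l0 / 2)%C. intros e He.
  destruct (Hl0 e He) as [d1 [Hd1 P1]].
  exists (Rmin d1 1). split; [apply Rmin_pos; lra|]. intros k Hk.
  assert (Hk1 : Cmod k < d1) by (eapply Rlt_le_trans; [apply Hk|apply Rmin_l]).
  assert (Hk2 : Cmod k < 1) by (eapply Rlt_le_trans; [apply Hk|apply Rmin_r]).
  replace (RtoC 0 + k)%C with k by ring.
  destruct (Ceq_dec k (RtoC 0)) as [->|Hk0].
  { rewrite cesaro_0. replace (f (RtoC 0) - f (RtoC 0) - RtoC 0 * (l0 / 2))%C with (RtoC 0) by ring.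
    rewrite Cmod_0. lra. }
  rewrite cesaro_neq0 by auto. rewrite cesaro_0. rewrite seg_integral_eq.
  set (I := (CInt (along_seg (cesaro_integrand f) 0 k) 0 1 : C)).
  replace (/ k * ((k - 0) * I))%C with I by (field; auto).
  assert (Hs : seg_cont (cesaro_integrand f) 0 k) by (apply seg_cont_disk; auto; rewrite Cmod_0; lra).
  assert (K1 := CisInt_RInt _ _ _ (along_seg_ex_RInt _ _ _ 0 1 Hs ltac:(lra) ltac:(lra))).
  assert (K2 := CisInt_minus _ _ _ _ _ _ (CisInt_minus _ _ _ _ _ _ K1 (CisInt_const (cesaro_integrand f (RtoC 0)) 0 1)) (CisInt_id_mul_0_1 (k * l0)%C)).
  assert (E : (I - f (RtoC 0) - k * (l0 / 2))%C =
              (I - RtoC (1 - 0) * cesaro_integrand f (RtoC 0) - k * l0 / 2)%C).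
  { rewrite cesaro_integrand_0. replace (RtoC (1 - 0)) with (RtoC 1) by (f_equal; ring). field. }
  rewrite E. unfold I. rewrite <- (CInt_unique _ _ _ _ K2).
  replace (e * Cmod k) with ((1 - 0) * (e * Cmod k)) by ring.
  apply CInt_bound; [lra| |].
  { apply CexInt_of_rcont; [lra|]. intros t Ht. apply rcont_minus; [apply rcont_minus|].
    - apply along_seg_rcont; auto.
    - apply rcont_const.
    - apply rcont_mult; [apply rcont_RtoC|apply rcont_const]. }
  intros t Ht. unfold along_seg.
  specialize (P1 (RtoC t * k)%C).
  replace (RtoC 0 + RtoC t * k)%C with (RtoC 0 + RtoC t * (k - 0))%C in P1 by ring.
  replace (cesaro_integrand f (RtoC 0 + RtoC t * (k - 0))%C - cesaro_integrand f (RtoC 0)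
      - RtoC t * (k * l0))%C with
     (cesaro_integrand f (RtoC 0 + RtoC t * (k - 0))%C - cesaro_integrand f (RtoC 0) - RtoC t * k * l0)%C
       by ring.
  assert (Htk : Cmod (RtoC t * k)%C <= Cmod k)
    by (rewrite Cmod_RtoC_mult, Rabs_pos_eq by lra; pose proof (Cmod_ge_0 k); nra).
  eapply Rle_trans; [apply P1; lra|]. apply Rmult_le_compat_l; lra.
Qed.

Lemma holo_disk_cesaro f : holo_disk f -> holo_disk (cesaro f).
Proof.
  intros Hf z Hz. destruct (Ceq_dec z (RtoC 0)) as [->|Hz0].
  - apply cder_cesaro_0; auto.
  - eexists. apply cder_cesaro_neq0; auto.
Qed.

Lemma cesaro_integrand_lincomb (f g : C -> C) (a b : C) :
  cesaro_integrand (fun w => a * f w + b * g w)%C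
  = (fun xi => a * cesaro_integrand f xi + b * cesaro_integrand g xi)%C.
Proof. apply functional_extensionality. intros xi. unfold cesaro_integrand, Cdiv. ring. Qed.

Lemma cesaro_lincomb (f g : C -> C) (a b : C) : holo_disk f -> holo_disk g ->
  forall z, Cmod z < 1 -> cesaro (fun w => a * f w + b * g w)%C z = (a * cesaro f z + b * cesaro g z)%C.
Proof.
  intros Hf Hg z Hz. destruct (Ceq_dec z (RtoC 0)) as [->|Hz0].
  - rewrite !cesaro_0. reflexivity.
  - assert (H0 : Cmod (RtoC 0) < 1) by (rewrite Cmod_0; lra).
    rewrite !cesaro_neq0, cesaro_integrand_lincomb, seg_integral_lincomb by
      (auto; apply seg_cont_disk; auto; apply cont_disk_of_holo_disk, holo_disk_cesaro_integrand; auto).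
    ring.
Qed.

Lemma seg_integral_cesaro_integrand f w : seg_integral (cesaro_integrand f) 0 w = (w * cesaro f w)%C.
Proof.
  destruct (Ceq_dec w (RtoC 0)) as [->|Hw0].
  - rewrite seg_integral_eq. ring.
  - rewrite cesaro_neq0 by auto. field. auto.
Qed.

Lemma cesaro_inj (f g : C -> C) : holo_disk f -> holo_disk g ->
  (forall z, Cmod z < 1 -> cesaro f z = cesaro g z) -> forall z, Cmod z < 1 -> f z = g z.
Proof.
  intros Hf Hg Heq z Hz.
  assert (Df := cder_seg_integral (cesaro_integrand f) (holo_disk_cesaro_integrand f Hf) z Hz).
  assert (Dg := cder_seg_integral (cesaro_integrand g) (holo_disk_cesaro_integrand g Hg) z Hz).
  assert (Df' : cder (fun w => seg_integral (cesaro_integrand g) 0 w) z (cesaro_integrand f z)).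
  { apply (cder_ext_near (fun w => seg_integral (cesaro_integrand f) 0 w) _ _ _ (1 - Cmod z)
      ltac:(lra)); auto.
    intros w Hw. rewrite !seg_integral_cesaro_integrand, Heq; auto.
    apply (Cmod_lt_of_sub_lt z). lra. }
  assert (E := cder_unique _ _ _ _ Df' Dg). unfold cesaro_integrand in E.
  assert (Hn := one_minus_neq0 _ Hz).
  replace (f z) with (f z / (1 - z) * (1 - z))%C by (field; auto).
  rewrite E. field. auto.
Qed.

Definition cesaro_preimage (g : C -> C) (z : C) : C := ((1 - z) * (g z + z * cderiv g z))%C.

Lemma holo_disk_cesaro_preimage g : holo_disk g -> holo_disk (cesaro_preimage g).
Proof.
  intros Hg z Hz. destruct (holo_disk_cderiv g Hg z Hz) as [l Hl].
  eexists. apply (cder_mult (fun z => 1 - z)%C (fun z => g z + z * cderiv g z)%C).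
  - apply cder_one_minus.
  - apply cder_plus; [apply cder_cderiv; auto|]. apply cder_mult; [apply cder_id|exact Hl].
Qed.

Lemma seg_integral_cesaro_preimage g z : holo_disk g -> Cmod z < 1 ->
  seg_integral (cesaro_integrand (cesaro_preimage g)) 0 z = (z * g z)%C.
Proof.
  intros Hg Hz. rewrite seg_integral_eq.
  assert (Hdc := cont_disk_of_holo_disk _ (holo_disk_cderiv g Hg)).
  assert (Hgc := cont_disk_of_holo_disk g Hg).
  set (pt := fun t => (0 + RtoC t * (z - 0))%C).
  assert (Hpt : forall t, 0 <= t <= 1 -> Cmod (pt t) < 1)
    by (intros; unfold pt; apply Cmod_convex_lt1; auto; rewrite Cmod_0; lra).
  assert (FT : CisInt (fun t => 1 * g (pt t) + RtoC t * (cderiv g (pt t) * (z - 0)))%C 0 1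
                (RtoC 1 * g (pt 1) - RtoC 0 * g (pt 0))%C).
  { apply (CisInt_derive (fun t => RtoC t * g (pt t))%C); [lra| |].
    - intros t Ht. apply rder_mult; [apply rder_RtoC|]. unfold pt. apply rder_comp_line.
      apply cder_cderiv; auto. apply Hpt; auto.
    - intros t Ht. apply rcont_plus; [apply rcont_mult; [apply rcont_const|]|].
      + apply (rcont_comp g pt); [unfold pt; apply rcont_affine|apply Hgc; auto].
      + apply rcont_mult; [apply rcont_RtoC|apply rcont_mult; [|apply rcont_const]].
        apply (rcont_comp (cderiv g) pt); [unfold pt; apply rcont_affine|apply Hdc; auto]. }
  assert (FT' : CisInt (along_seg (cesaro_integrand (cesaro_preimage g)) 0 z) 0 1 (g z)).
  { replace (g z) with (RtoC 1 * g (pt 1) - RtoC 0 * g (pt 0))%C.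
    2:{ unfold pt. replace (0 + RtoC 1 * (z - 0))%C with z by ring. ring. }
    eapply CisInt_ext; [|exact FT]. intros t Ht. rewrite Rmin_left, Rmax_right in Ht by lra.
    unfold along_seg, cesaro_integrand, cesaro_preimage. fold (pt t).
    assert (Hn := one_minus_neq0 _ (Hpt t ltac:(lra))).
    match goal with |- ?a = ?b => change (@eq C a b) end.
    unfold pt. field. unfold pt in Hn. intro E; apply Hn; transitivity (1 - RtoC t * z)%C; [ring|exact E]. }
  rewrite (CInt_unique _ _ _ _ FT'). ring.
Qed.

Lemma cesaro_cesaro_preimage g : holo_disk g -> forall z, Cmod z < 1 -> cesaro (cesaro_preimage g) z = g z.
Proof.
  intros Hg z Hz. destruct (Ceq_dec z (RtoC 0)) as [->|Hz0].
  - rewrite cesaro_0. unfold cesaro_preimage. ring.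
  - rewrite cesaro_neq0, seg_integral_cesaro_preimage by auto. field. auto.
Qed.

Open Scope C_scope.

Theorem mainTheorem3 :
  (* C maps O(D) into O(D) *)
  (forall f : C -> C, analytic_on_disk f -> analytic_on_disk (cesaro f)) /\
  (* C is linear on O(D) *)
  (forall (f g : C -> C) (a b : C), analytic_on_disk f -> analytic_on_disk g ->
     forall z : C, in_disk z ->
       cesaro (fun w => a * f w + b * g w) z = a * cesaro f z + b * cesaro g z) /\
  (* C is injective on O(D) (functions identified by their values on D) *)
  (forall f g : C -> C, analytic_on_disk f -> analytic_on_disk g ->
     (forall z : C, in_disk z -> cesaro f z = cesaro g z) ->
     forall z : C, in_disk z -> f z = g z) /\
  (* C is surjective onto O(D) *)
  (forall g : C -> C, analytic_on_disk g ->
     exists f : C -> C, analytic_on_disk f /\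
       forall z : C, in_disk z -> cesaro f z = g z).
Proof.
  split; [|split; [|split]].
  - intros f Hf. apply analytic_of_holo_disk, holo_disk_cesaro, holo_disk_of_analytic, Hf.
  - intros f g a b Hf Hg. apply cesaro_lincomb; apply holo_disk_of_analytic; assumption.
  - intros f g Hf Hg. apply cesaro_inj; apply holo_disk_of_analytic; assumption.
  - intros g Hg. apply holo_disk_of_analytic in Hg. exists (cesaro_preimage g). split.
    + apply analytic_of_holo_disk, holo_disk_cesaro_preimage, Hg.
    + apply cesaro_cesaro_preimage, Hg.
Qed.
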